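(* Fix network data $(N,\mathcal S,R,f)$ satisfying the standing assumptions, $T>0$, $K>0$ and $\lambda\in\mathbb R_+^N$. Let $\mathcal X$ be the set of all sample paths of this switched network under the MW-$f$ policy. Let $\varepsilon_j\in\mathbb R_+$ and $\lambda^j\in\mathbb R_+^N$ be sequences indexed by $j$ in some totally ordered countable set with $\varepsilon_j\to0$ and $\lambda^j\to\lambda$. Let $G_j\subset C^I(T)\times[1,\infty)$ ($I=3N+|\mathcal S|$) be sets such that each $(\bar x,z)\in G_j$ is of the form: $\bar x$ is the fluid-scaled version with scaling parameter $z$ of some $X\in\mathcal X$ ($z$ may depend on $X$); and $\inf\{z:(\bar x,z)\in G_j\}\to\infty$ as $j\to\infty$; $\sup_{(\bar x,z)\in G_j}\sup_{t\in[0,T]}|\bar a(t)-\lambda^jt|\le\varepsilon_j$ for all $j$; $\sup_{(\bar x,z)\in G_j}|\bar q(0)|\le K$ for all $j$. Then $\sup_{(\bar x,z)\in G_j}d(\bar x,\mathrm{FMS}_K)\to0$ as $j\to\infty$. If moreover $q_0\in\mathbb R_+^N$ and $\varepsilon'_j\to0$ satisfy $\sup_{(\bar x,z)\in G_j}|\bar q(0)-q_0|\le\varepsilon'_j$ for all $j$, then $\sup_{(\bar x,z)\in G_j}d(\bar x,\mathrm{FMS}(q_0))\to0$.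
   Context: Norms: $|x|=\max_i|x_i|$; $C^I(T)$ is the space of continuous maps $[0,T]\to\mathbb R^I$ with $\|g\|=\sup_{t\in[0,T]}|g(t)|$, $d(g,h)=\|g-h\|$, $d(g,\mathcal E)=\inf_{h\in\mathcal E}d(g,h)$. Switched network: $N$ queues; finite schedule set $\mathcal S\subset\mathbb R_+^N$; routing matrix $R\in\{0,1\}^{N\times N}$ with at most one 1 per row, acyclic ($\tilde R=(I-R^T)^{-1}$ exists); $R=0$ is single-hop. A sample path $X=(Q,A,Y,S)$ in discrete time $\tau\in\{0,1,\dots\}$: $A(0)=0$, $A$ nondecreasing (cumulative exogenous arrivals); $B(0)=0$, $dB(\tau)=B(\tau+1)-B(\tau)\in\mathcal S$; $Y(0)=0$, $Y(\tau+1)-Y(\tau)=[dB(\tau)-Q(\tau)]^+$; $S_\pi(\tau)=\#\{\tau'<\tau:dB(\tau')=\pi\}$, so $B(\tau)=\sum_\pi S_\pi(\tau)\pi$; and $Q(\tau)=Q(0)+A(\tau)-(I-R^T)(B(\tau)-Y(\tau))$. MW-$f$ policy: $dB(\tau)\in\arg\max_{\pi\in\mathcal S}\pi\cdot(I-R)f(Q(\tau))$, $f$ componentwise. Standing assumptions: $f:\mathbb R_+\to\mathbb R_+$ differentiable, strictly increasing, $f(0)=0$, and if $\pi$ maximizes $\rho\mapsto\rho\cdot(I-R)f(q)$ over $\mathcal S$ then it maximizes $\rho\mapsto\rho\cdot(I-R)f(\kappa q)$ for every $\kappa\ge0$; in the multi-hop case also: $\pi\in\mathcal S$, $\rho_n\in\{0,\pi_n\}\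 \forall n$ implies $\rho\in\mathcal S$. Fluid scaling: extend $X$ to real time by linear interpolation; for $z\ge1$, $\bar x(t)=(\bar q,\bar a,\bar y,\bar s)(t)=(Q(zt),A(zt),Y(zt),S(zt))/z$, $t\in[0,T]$. Fluid model solution with arrival rate $\lambda$: $x=(q,a,y,s)\in C^I(T)$ with $q,a,y:[0,T]\to\mathbb R_+^N$, $s=(s_\pi)_{\pi\in\mathcal S}$, $s_\pi\ge0$, all components absolutely continuous, satisfying: $q(t)=q(0)+a(t)-(I-R^T)(\sum_\pi s_\pi(t)\pi-y(t))$; $a(t)=\lambda t$; $\sum_\pi s_\pi(t)=t$; $y(t)\le\sum_\pi s_\pi(t)\pi$; each $s_\pi$ and $y_n$ nondecreasing; at every time $t$ where they are differentiable, $\dot y_n(t)=0$ if $q_n(t)>0$, and $\dot s_\pi(t)=0$ if $\pi\cdot(I-R)f(q(t))<\max_{\rho\in\mathcal S}\rho\cdot(I-R)f(q(t))$. $\mathrm{FMS}$ is the set of these; $\mathrm{FMS}_K=\{x\in\mathrm{FMS}:|q(0)|\le K\}$; $\mathrm{FMS}(q_0)=\{x\in\mathrm{FMS}:q(0)=q_0\}$. *)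

From Stdlib Require Import Reals Lra Lia.
Open Scope R_scope.

Fixpoint fsum (m : nat) (F : nat -> R) : R :=
  match m with
  | O => 0
  | S m' => fsum m' F + F m'
  end.

Fixpoint cnt (sigma : nat -> nat) (k : nat) (tau : nat) : nat :=
  match tau with
  | O => O
  | S t => (cnt sigma k t + (if Nat.eqb (sigma t) k then 1 else 0))%nat
  end.

(* Vectors in R^N are functions nat -> R (only indices n < N matter).
   Schedules: sched k (k < M) is the k-th element pi_k of the finite
   schedule set S; M = |S|.  Routing matrix Rm n m = R_{nm}. *)

Definition weight (N : nat) (Rm : nat -> nat -> R) (f : R -> R)
  (pi q : nat -> R) : R :=
  fsum N (fun n => pi n * (f (q n) - fsum N (fun m => Rm n m * f (q m)))).

Definition IminusRT (N : nat) (Rm : nat -> nat -> R) (v : nat -> R) (n : nat) : R :=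
  v n - fsum N (fun m => Rm m n * v m).

Definition kdelta (i j : nat) : R := if Nat.eqb i j then 1 else 0.

Definition derivable_on_nonneg (f : R -> R) : Prop :=
  forall x, 0 <= x -> exists l, forall e, 0 < e -> exists d, 0 < d /\
    forall h, h <> 0 -> Rabs h < d -> 0 <= x + h ->
      Rabs ((f (x + h) - f x) / h - l) < e.

Definition network_ok (N M : nat) (sched : nat -> nat -> R)
  (Rm : nat -> nat -> R) (f : R -> R) : Prop :=
  (* S is a finite subset of R_+^N, listed without repetition *)
  (forall k n, (k < M)%nat -> (n < N)%nat -> 0 <= sched k n) /\
  (forall k l, (k < M)%nat -> (l < M)%nat -> k <> l ->
     exists n, (n < N)%nat /\ sched k n <> sched l n) /\
  (forall n m, (n < N)%nat -> (m < N)%nat -> Rm n m = 0 \/ Rm n m = 1) /\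
  (forall n m1 m2, (n < N)%nat -> (m1 < N)%nat -> (m2 < N)%nat ->
     Rm n m1 = 1 -> Rm n m2 = 1 -> m1 = m2) /\
  (* acyclic: (I - R^T)^{-1} exists *)
  (exists Rt : nat -> nat -> R, forall i j, (i < N)%nat -> (j < N)%nat ->
     fsum N (fun m => (kdelta i m - Rm m i) * Rt m j) = kdelta i j /\
     fsum N (fun m => Rt i m * (kdelta m j - Rm j m)) = kdelta i j) /\
  (forall x, 0 <= x -> 0 <= f x) /\
  derivable_on_nonneg f /\
  (forall x y, 0 <= x -> x < y -> f x < f y) /\
  f 0 = 0 /\
  (forall q : nat -> R, (forall n, (n < N)%nat -> 0 <= q n) ->
   forall k, (k < M)%nat ->
     (forall l, (l < M)%nat -> weight N Rm f (sched l) q <= weight N Rm f (sched k) q) ->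
     forall kappa, 0 <= kappa -> forall l, (l < M)%nat ->
       weight N Rm f (sched l) (fun n => kappa * q n)
         <= weight N Rm f (sched k) (fun n => kappa * q n)) /\
  (* multi-hop case: S closed under zeroing components *)
  ((exists n m, (n < N)%nat /\ (m < N)%nat /\ Rm n m <> 0) ->
     forall k, (k < M)%nat -> forall rho : nat -> R,
       (forall n, (n < N)%nat -> rho n = 0 \/ rho n = sched k n) ->
       exists l, (l < M)%nat /\ forall n, (n < N)%nat -> sched l n = rho n).

(* Discrete-time sample path X = (Q, A, Y, S): time -> component -> value.
   dS tau k = S_{pi_k}(tau). *)
Record dpath := mkdpath {
  dQ : nat -> nat -> R; dA : nat -> nat -> R;
  dY : nat -> nat -> R; dS : nat -> nat -> R }.

(* Sample path of the switched network under the MW-f policy;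
   sigma tau is the index k with dB(tau) = pi_k. *)
Definition is_MW_sample_path (N M : nat) (sched : nat -> nat -> R)
  (Rm : nat -> nat -> R) (f : R -> R) (X : dpath) : Prop :=
  exists sigma : nat -> nat,
    (forall tau, (sigma tau < M)%nat) /\
    (forall n, (n < N)%nat -> 0 <= dQ X 0%nat n) /\
    (forall n, (n < N)%nat -> dA X 0%nat n = 0) /\
    (forall tau n, (n < N)%nat -> dA X tau n <= dA X (S tau) n) /\
    (forall tau k, (k < M)%nat -> dS X tau k = INR (cnt sigma k tau)) /\
    (forall n, (n < N)%nat -> dY X 0%nat n = 0) /\
    (forall tau n, (n < N)%nat ->
       dY X (S tau) n - dY X tau n = Rmax 0 (sched (sigma tau) n - dQ X tau n)) /\
    (forall tau n, (n < N)%nat ->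
       dQ X tau n = dQ X 0%nat n + dA X tau n
         - IminusRT N Rm (fun m => fsum M (fun k => dS X tau k * sched k m)
                                   - dY X tau m) n) /\
    (forall tau l, (l < M)%nat ->
       weight N Rm f (sched l) (dQ X tau) <= weight N Rm f (sched (sigma tau)) (dQ X tau)).

(* Element of C^I(T): continuous-time path x = (q, a, y, s); only
   t in [0,T] and indices n < N, k < M matter. *)
Record fpath := mkfpath {
  fq : R -> nat -> R; fa : R -> nat -> R;
  fy : R -> nat -> R; fs : R -> nat -> R }.

Definition interp_at (g : nat -> R) (u v : R) : Prop :=
  forall k : nat, INR k <= u <= INR k + 1 ->
    v = g k + (u - INR k) * (g (S k) - g k).

Definition is_fluid_scaling (N M : nat) (T : R) (X : dpath) (z : R) (x : fpath) : Prop :=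
  forall t, 0 <= t <= T ->
    (forall n, (n < N)%nat ->
       interp_at (fun tau => dQ X tau n) (z * t) (z * fq x t n) /\
       interp_at (fun tau => dA X tau n) (z * t) (z * fa x t n) /\
       interp_at (fun tau => dY X tau n) (z * t) (z * fy x t n)) /\
    (forall k, (k < M)%nat ->
       interp_at (fun tau => dS X tau k) (z * t) (z * fs x t k)).

Definition dist_le (N M : nat) (T : R) (x h : fpath) (e : R) : Prop :=
  forall t, 0 <= t <= T ->
    (forall n, (n < N)%nat ->
       Rabs (fq x t n - fq h t n) <= e /\
       Rabs (fa x t n - fa h t n) <= e /\
       Rabs (fy x t n - fy h t n) <= e) /\
    (forall k, (k < M)%nat -> Rabs (fs x t k - fs h t k) <= e).

Definition abs_cont (g : R -> R) (a b : R) : Prop :=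
  forall e, 0 < e -> exists d, 0 < d /\
    forall (m : nat) (u v : nat -> R),
      (m > 0)%nat ->
      a <= u 0%nat ->
      (forall i, (i < m)%nat -> u i <= v i) ->
      (forall i, (S i < m)%nat -> v i <= u (S i)) ->
      v (pred m) <= b ->
      fsum m (fun i => v i - u i) < d ->
      fsum m (fun i => Rabs (g (v i) - g (u i))) < e.

Definition is_FMS (N M : nat) (sched : nat -> nat -> R) (Rm : nat -> nat -> R)
  (f : R -> R) (T : R) (lam : nat -> R) (x : fpath) : Prop :=
  (forall t n, 0 <= t <= T -> (n < N)%nat ->
     0 <= fq x t n /\ 0 <= fa x t n /\ 0 <= fy x t n) /\
  (forall t k, 0 <= t <= T -> (k < M)%nat -> 0 <= fs x t k) /\
  (forall n, (n < N)%nat ->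
     abs_cont (fun t => fq x t n) 0 T /\ abs_cont (fun t => fa x t n) 0 T /\
     abs_cont (fun t => fy x t n) 0 T) /\
  (forall k, (k < M)%nat -> abs_cont (fun t => fs x t k) 0 T) /\
  (forall t n, 0 <= t <= T -> (n < N)%nat ->
     fq x t n = fq x 0 n + fa x t n
       - IminusRT N Rm (fun m => fsum M (fun k => fs x t k * sched k m) - fy x t m) n) /\
  (forall t n, 0 <= t <= T -> (n < N)%nat -> fa x t n = lam n * t) /\
  (forall t, 0 <= t <= T -> fsum M (fun k => fs x t k) = t) /\
  (forall t n, 0 <= t <= T -> (n < N)%nat ->
     fy x t n <= fsum M (fun k => fs x t k * sched k n)) /\
  (forall t1 t2 k, 0 <= t1 -> t1 <= t2 -> t2 <= T -> (k < M)%nat ->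
     fs x t1 k <= fs x t2 k) /\
  (forall t1 t2 n, 0 <= t1 -> t1 <= t2 -> t2 <= T -> (n < N)%nat ->
     fy x t1 n <= fy x t2 n) /\
  (forall t n l, 0 < t < T -> (n < N)%nat ->
     derivable_pt_lim (fun u => fy x u n) t l -> 0 < fq x t n -> l = 0) /\
  (forall t k l, 0 < t < T -> (k < M)%nat ->
     derivable_pt_lim (fun u => fs x u k) t l ->
     (exists l', (l' < M)%nat /\
        weight N Rm f (sched k) (fq x t) < weight N Rm f (sched l') (fq x t)) ->
     l = 0).

Definition total_order {J : Type} (le : J -> J -> Prop) : Prop :=
  (forall a, le a a) /\ (forall a b, le a b -> le b a -> a = b) /\
  (forall a b c, le a b -> le b c -> le a c) /\ (forall a b, le a b \/ le b a).

Definition countable_type (J : Type) : Prop :=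
  exists enc : J -> nat, forall a b, enc a = enc b -> a = b.

Definition eventually {J : Type} (le : J -> J -> Prop) (P : J -> Prop) : Prop :=
  exists j0, forall j, le j0 j -> P j.

(* Suppose the conclusion fails for some e > 0.  Then for every k there is an element (x_k, z_k)
   of some G_j, with eps_j, |lam^j - lam| < 1/(k+1) and z_k >= k, lying at distance >= e from
   every fluid model solution.  The components y and s of a fluid-scaled path are Lipschitz with
   a constant bounded by the schedules, and q(0) is bounded by K, so an Arzela-Ascoli diagonal
   argument extracts a uniformly convergent subsequence; q converges along with it, being an
   affine function of (q(0), a, s, y).  The limit inherits every closed relation of the fluid
   model.  Its idling conditions come from the discrete dynamics: where q_n(t) > 0 the rescaled
   queue exceeds all schedule entries on a time window, so Y_n does not grow there; where the
   schedule j is strictly suboptimal at q(t), scale invariance of the MW-f argmax shows that j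
   is never chosen on a window, so S_j is flat there.  Hence the limit is a fluid model solution
   e-close to x_k for large k, a contradiction.  With initial condition q0, the limit moreover
   starts at q0. *)

From Stdlib Require Import Reals Lra Lia ZArith List Classical ClassicalEpsilon.
Open Scope R_scope.

Lemma Rabs_le_iff x e : Rabs x <= e <-> - e <= x <= e.
Proof. unfold Rabs; destruct (Rcase_abs x); split; intros; lra. Qed.

Lemma Rabs_le_mono_lip (g : R -> R) (T L t t' : R) :
  (forall u u', 0 <= u -> u <= u' -> u' <= T -> 0 <= g u' - g u <= L * (u' - u)) ->
  0 <= t <= T -> 0 <= t' <= T -> Rabs (g t - g t') <= L * Rabs (t - t').
Proof.
  intros H Ht Ht'. destruct (Rle_dec t t') as [Hle | Hlt].
  - specialize (H t t' ltac:(lra) Hle ltac:(lra)).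
    rewrite Rabs_minus_sym, (Rabs_minus_sym t), !Rabs_right by lra. lra.
  - specialize (H t' t ltac:(lra) ltac:(lra) ltac:(lra)). rewrite !Rabs_right by lra. lra.
Qed.

Lemma floor_nat u : 0 <= u -> exists k : nat, INR k <= u < INR k + 1.
Proof.
  intros Hu. destruct (archimed u) as [H1 H2].
  assert (Hz : (0 <= up u - 1)%Z) by (assert (Hup : 0 < IZR (up u)) by lra; apply lt_0_IZR in Hup; lia).
  exists (Z.to_nat (up u - 1)). rewrite INR_IZR_INZ, Z2Nat.id, minus_IZR by exact Hz. lra.
Qed.

Lemma nat_above x : exists n : nat, x <= INR n.
Proof.
  destruct (floor_nat (Rmax 0 x) (Rmax_l _ _)) as [k Hk]. exists (S k).
  rewrite S_INR. pose proof (Rmax_r 0 x). lra.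
Qed.

Lemma inv_succ_pos k : 0 < 1 / (INR k + 1).
Proof. apply Rdiv_lt_0_compat; [lra | pose proof (pos_INR k); lra]. Qed.

Lemma inv_succ_small c e : 0 < e -> exists m : nat, forall k, (m <= k)%nat -> c / (INR k + 1) <= e.
Proof.
  intros He. destruct (nat_above (Rabs c / e)) as [m Hm]. exists m. intros k Hk.
  apply le_INR in Hk. assert (0 < INR k + 1) by (pose proof (pos_INR m); lra).
  apply Rle_trans with (Rabs c / (INR k + 1)).
  { apply Rmult_le_compat_r; [apply Rlt_le, Rinv_0_lt_compat; lra | apply Rle_abs]. }
  apply Rmult_le_reg_r with (INR k + 1); [lra|]. unfold Rdiv. rewrite Rmult_assoc, Rinv_l by lra.
  apply Rmult_le_compat_r with (r := e) in Hm; [|lra]. unfold Rdiv in Hm.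
  rewrite Rmult_assoc, Rinv_l in Hm by lra. nra.
Qed.

Lemma fsum_ext m F G : (forall i, (i < m)%nat -> F i = G i) -> fsum m F = fsum m G.
Proof.
  induction m as [|m IH]; intros H; simpl; [reflexivity|].
  rewrite IH, H by (auto; intros; apply H; lia). reflexivity.
Qed.

Lemma fsum_plus m F G : fsum m (fun i => F i + G i) = fsum m F + fsum m G.
Proof. induction m; simpl; [ring | rewrite IHm; ring]. Qed.

Lemma fsum_minus m F G : fsum m (fun i => F i - G i) = fsum m F - fsum m G.
Proof. induction m; simpl; [ring | rewrite IHm; ring]. Qed.

Lemma fsum_scal m a F : fsum m (fun i => a * F i) = a * fsum m F.
Proof. induction m; simpl; [ring | rewrite IHm; ring]. Qed.

Lemma fsum_const m c : fsum m (fun _ => c) = INR m * c.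
Proof. induction m; simpl fsum; [simpl; ring | rewrite IHm, S_INR; ring]. Qed.

Lemma fsum_zero m F : (forall i, (i < m)%nat -> F i = 0) -> fsum m F = 0.
Proof. intros H. rewrite (fsum_ext m F (fun _ => 0)), fsum_const by exact H. ring. Qed.

Lemma fsum_le m F G : (forall i, (i < m)%nat -> F i <= G i) -> fsum m F <= fsum m G.
Proof.
  induction m as [|m IH]; intros H; simpl; [lra|].
  assert (fsum m F <= fsum m G) by (apply IH; intros; apply H; lia).
  assert (F m <= G m) by (apply H; lia). lra.
Qed.

Lemma fsum_nonneg m F : (forall i, (i < m)%nat -> 0 <= F i) -> 0 <= fsum m F.
Proof. intros H. rewrite <- (fsum_zero m (fun _ => 0)) by auto. apply fsum_le; auto. Qed.

Lemma fsum_ge_term m F j : (forall i, (i < m)%nat -> 0 <= F i) -> (j < m)%nat -> F j <= fsum m F.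
Proof.
  induction m as [|m IH]; intros H Hj; [lia|]. simpl.
  assert (0 <= F m) by (apply H; lia).
  destruct (Nat.eq_dec j m) as [-> | Hne].
  - assert (0 <= fsum m F) by (apply fsum_nonneg; intros; apply H; lia). lra.
  - assert (F j <= fsum m F) by (apply IH; [intros; apply H |]; lia). lra.
Qed.

Lemma fsum_abs_le m F c : (forall i, (i < m)%nat -> Rabs (F i) <= c) -> Rabs (fsum m F) <= INR m * c.
Proof.
  induction m as [|m IH]; intros H; simpl fsum; [simpl; rewrite Rabs_R0; lra|].
  rewrite S_INR. eapply Rle_trans; [apply Rabs_triang|].
  assert (Rabs (fsum m F) <= INR m * c) by (apply IH; intros; apply H; lia).
  assert (Rabs (F m) <= c) by (apply H; lia). lra.
Qed.

Lemma fsum_indicator m j F : (j < m)%nat ->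
  fsum m (fun i => (if Nat.eqb j i then 1 else 0) * F i) = F j.
Proof.
  induction m as [|m IH]; intros Hj; [lia|]. simpl.
  destruct (Nat.eq_dec j m) as [-> | Hne].
  - rewrite Nat.eqb_refl, fsum_zero; [ring|].
    intros i Hi. destruct (Nat.eqb_spec m i); [lia | ring].
  - rewrite IH by lia. destruct (Nat.eqb_spec j m); [lia | ring].
Qed.

Lemma fsum_convex m th (a b c : nat -> R) :
  fsum m (fun i => ((1 - th) * a i + th * b i) * c i)
  = (1 - th) * fsum m (fun i => a i * c i) + th * fsum m (fun i => b i * c i).
Proof. induction m; simpl; [ring | rewrite IHm; ring]. Qed.

Lemma fsum_scaled_convex m z th (s a b c : nat -> R) :
  (forall j, (j < m)%nat -> z * s j = (1 - th) * a j + th * b j) ->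
  z * fsum m (fun j => s j * c j) = (1 - th) * fsum m (fun j => a j * c j) + th * fsum m (fun j => b j * c j).
Proof.
  intros H. rewrite <- fsum_scal, <- fsum_convex. apply fsum_ext. intros j Hj. rewrite <- H by exact Hj. ring.
Qed.

Lemma Un_cv_const c : Un_cv (fun _ => c) c.
Proof. intros e He. exists O. intros. unfold R_dist. rewrite Rminus_diag, Rabs_R0. lra. Qed.

Lemma Un_cv_fsum m (u : nat -> nat -> R) (l : nat -> R) :
  (forall i, (i < m)%nat -> Un_cv (fun k => u k i) (l i)) ->
  Un_cv (fun k => fsum m (u k)) (fsum m l).
Proof.
  induction m as [|m IH]; intros H; simpl; [apply Un_cv_const|].
  apply CV_plus; [apply IH; intros; apply H | apply H]; lia.
Qed.

Lemma Un_cv_bounds (u : nat -> R) l a b : (forall k, a <= u k <= b) -> Un_cv u l -> a <= l <= b.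
Proof.
  intros H Hu. split.
  - apply (Rle_cv_lim (Un := fun _ => a) (Vn := u)); [intros k; apply H | apply Un_cv_const | exact Hu].
  - apply (Rle_cv_lim (Un := u) (Vn := fun _ => b)); [intros k; apply H | exact Hu | apply Un_cv_const].
Qed.

Lemma Un_cv_eventually_eq (u v : nat -> R) l l' :
  eventually le (fun k => u k = v k) -> Un_cv u l -> Un_cv v l' -> l = l'.
Proof.
  intros [k0 Hk0] Hu Hv. destruct (Req_dec l l') as [| Hne]; [assumption | exfalso].
  assert (Hpos : 0 < Rabs (l - l')) by (apply Rabs_pos_lt; lra).
  destruct (Hu (Rabs (l - l') / 2) ltac:(lra)) as [k1 H1].
  destruct (Hv (Rabs (l - l') / 2) ltac:(lra)) as [k2 H2].
  set (k := Nat.max k0 (Nat.max k1 k2)).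
  specialize (H1 k ltac:(lia)). specialize (H2 k ltac:(lia)). unfold R_dist in H1, H2.
  rewrite Hk0 in H1 by lia.
  pose proof (Rabs_triang (v k - l') (l - v k)) as Htri. rewrite Rabs_minus_sym in H1.
  replace (v k - l' + (l - v k)) with (l - l') in Htri by ring. lra.
Qed.

Lemma eventually_and {J : Type} (leJ : J -> J -> Prop) (A B : J -> Prop) :
  total_order leJ -> eventually leJ A -> eventually leJ B -> eventually leJ (fun j => A j /\ B j).
Proof.
  intros (_ & _ & Htrans & Htot) [j1 H1] [j2 H2]. destruct (Htot j1 j2).
  - exists j2. intros j Hj. split; [apply H1; eapply Htrans |apply H2]; eauto.
  - exists j1. intros j Hj. split; [apply H1 | apply H2; eapply Htrans]; eauto.
Qed.

Lemma eventually_mono {J : Type} (leJ : J -> J -> Prop) (A B : J -> Prop) :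
  (forall j, A j -> B j) -> eventually leJ A -> eventually leJ B.
Proof. intros H [j0 H0]. exists j0. auto. Qed.

Lemma eventually_witness {J : Type} (leJ : J -> J -> Prop) (E P : J -> Prop) :
  eventually leJ E -> ~ eventually leJ P -> exists j, E j /\ ~ P j.
Proof.
  intros [j0 H0] HP. apply NNPP. intros Hno. apply HP. exists j0. intros j Hj.
  apply NNPP. intros HPj. apply Hno. exists j. auto.
Qed.

Lemma nat_le_total_order : total_order le.
Proof. repeat split; intros; lia. Qed.

Definition unif_cvg (P : nat) (T : R) (F : nat -> nat -> R -> R) (g : nat -> R -> R) : Prop :=
  forall e, 0 < e -> eventually le (fun k =>
    forall i t, (i < P)%nat -> 0 <= t <= T -> Rabs (F k i t - g i t) <= e).

Lemma unif_cvg_pointwise P T F g : unif_cvg P T F g ->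
  forall i t, (i < P)%nat -> 0 <= t <= T -> Un_cv (fun k => F k i t) (g i t).
Proof.
  intros H i t Hi Ht e He. destruct (H (e / 2) ltac:(lra)) as [k0 Hk0].
  exists k0. intros k Hk. unfold R_dist. specialize (Hk0 k Hk i t Hi Ht). lra.
Qed.

Definition sched_bound (N M : nat) (sched : nat -> nat -> R) : R :=
  1 + fsum M (fun k => fsum N (fun n => sched k n)).

Section Network.
Variables (N M : nat) (sched Rm : nat -> nat -> R) (f : R -> R).
Hypothesis Hok : network_ok N M sched Rm f.

Lemma network_sched_nonneg k n : (k < M)%nat -> (n < N)%nat -> 0 <= sched k n.
Proof. apply Hok. Qed.

Lemma network_routing_bounds n m : (n < N)%nat -> (m < N)%nat -> 0 <= Rm n m <= 1.
Proof. intros Hn Hm. destruct Hok as (_ & _ & H & _). destruct (H n m Hn Hm) as [-> | ->]; lra. Qed.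

Lemma network_f_derivable : derivable_on_nonneg f.
Proof. apply Hok. Qed.

Lemma network_argmax_scale (q : nat -> R) k kappa l :
  (forall n, (n < N)%nat -> 0 <= q n) -> (k < M)%nat -> (l < M)%nat -> 0 <= kappa ->
  (forall l', (l' < M)%nat -> weight N Rm f (sched l') q <= weight N Rm f (sched k) q) ->
  weight N Rm f (sched l) (fun n => kappa * q n) <= weight N Rm f (sched k) (fun n => kappa * q n).
Proof. intros. destruct Hok as (_ & _ & _ & _ & _ & _ & _ & _ & _ & Hscale & _). eauto. Qed.

Lemma sched_bound_ge1 : 1 <= sched_bound N M sched.
Proof.
  unfold sched_bound. assert (0 <= fsum M (fun k => fsum N (fun n => sched k n))); [|lra].
  apply fsum_nonneg; intros; apply fsum_nonneg; intros; apply network_sched_nonneg; auto.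
Qed.

Lemma sched_le_bound k n : (k < M)%nat -> (n < N)%nat -> 0 <= sched k n <= sched_bound N M sched.
Proof.
  intros Hk Hn. split; [apply network_sched_nonneg; auto|]. unfold sched_bound.
  assert (sched k n <= fsum M (fun k => fsum N (fun n => sched k n))); [|lra].
  eapply Rle_trans; [apply (fsum_ge_term N (fun n => sched k n) n); auto; intros; apply network_sched_nonneg; auto|].
  apply (fsum_ge_term M (fun k => fsum N (fun n => sched k n)) k); auto.
  intros; apply fsum_nonneg; intros; apply network_sched_nonneg; auto.
Qed.

End Network.

Lemma IminusRT_ext N Rm v w n : (forall m, (m < N)%nat -> v m = w m) -> (n < N)%nat ->
  IminusRT N Rm v n = IminusRT N Rm w n.
Proof.
  intros H Hn. unfold IminusRT. rewrite H by exact Hn. f_equal.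
  apply fsum_ext; intros; rewrite H; auto.
Qed.

Lemma IminusRT_lin N Rm a b v w n :
  IminusRT N Rm (fun m => a * v m + b * w m) n = a * IminusRT N Rm v n + b * IminusRT N Rm w n.
Proof.
  unfold IminusRT. rewrite (fsum_ext N _ (fun m => a * (Rm m n * v m) + b * (Rm m n * w m)))
    by (intros; ring).
  rewrite fsum_plus, !fsum_scal. ring.
Qed.

Lemma IminusRT_bound N Rm v n c : (n < N)%nat -> (forall m, (m < N)%nat -> 0 <= Rm m n <= 1) ->
  (forall m, (m < N)%nat -> Rabs (v m) <= c) -> Rabs (IminusRT N Rm v n) <= (1 + INR N) * c.
Proof.
  intros Hn HR Hv. unfold IminusRT.
  assert (Rabs (fsum N (fun m => Rm m n * v m)) <= INR N * c).
  { apply fsum_abs_le. intros m Hm. rewrite Rabs_mult, (Rabs_right (Rm m n)) by (apply Rle_ge, HR; auto).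
    specialize (HR m Hm). specialize (Hv m Hm). pose proof (Rabs_pos (v m)). nra. }
  eapply Rle_trans; [unfold Rminus; apply Rabs_triang|]. rewrite Rabs_Ropp. specialize (Hv n Hn). lra.
Qed.

Record MW_run (N M : nat) (sched Rm : nat -> nat -> R) (f : R -> R)
  (X : dpath) (sigma : nat -> nat) : Prop := {
  run_sched_lt : forall tau, (sigma tau < M)%nat;
  run_Q0_nonneg : forall n, (n < N)%nat -> 0 <= dQ X 0%nat n;
  run_A_mono : forall tau n, (n < N)%nat -> dA X tau n <= dA X (S tau) n;
  run_S_count : forall tau k, (k < M)%nat -> dS X tau k = INR (cnt sigma k tau);
  run_Y0 : forall n, (n < N)%nat -> dY X 0%nat n = 0;
  run_Y_step : forall tau n, (n < N)%nat ->
    dY X (S tau) n - dY X tau n = Rmax 0 (sched (sigma tau) n - dQ X tau n);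
  run_queue : forall tau n, (n < N)%nat ->
    dQ X tau n = dQ X 0%nat n + dA X tau n
      - IminusRT N Rm (fun m => fsum M (fun k => dS X tau k * sched k m) - dY X tau m) n;
  run_MW : forall tau l, (l < M)%nat ->
    weight N Rm f (sched l) (dQ X tau) <= weight N Rm f (sched (sigma tau)) (dQ X tau) }.
Arguments run_sched_lt {_ _ _ _ _ _ _}.
Arguments run_Q0_nonneg {_ _ _ _ _ _ _}.
Arguments run_A_mono {_ _ _ _ _ _ _}.
Arguments run_S_count {_ _ _ _ _ _ _}.
Arguments run_Y0 {_ _ _ _ _ _ _}.
Arguments run_Y_step {_ _ _ _ _ _ _}.
Arguments run_queue {_ _ _ _ _ _ _}.
Arguments run_MW {_ _ _ _ _ _ _}.

Lemma MW_sample_path_run N M sched Rm f X :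
  is_MW_sample_path N M sched Rm f X -> exists sigma, MW_run N M sched Rm f X sigma.
Proof. intros (sigma & H). exists sigma. destruct H as (? & ? & ? & ? & ? & ? & ? & ? & ?). now constructor. Qed.

Section SamplePath.
Variables (N M : nat) (sched Rm : nat -> nat -> R) (f : R -> R) (X : dpath) (sigma : nat -> nat).
Hypothesis Hok : network_ok N M sched Rm f.
Hypothesis HX : MW_run N M sched Rm f X sigma.
Local Notation L := (sched_bound N M sched).

Lemma run_S_step tau k : (k < M)%nat ->
  dS X (S tau) k - dS X tau k = if Nat.eqb (sigma tau) k then 1 else 0.
Proof.
  intros Hk. rewrite !(run_S_count HX) by exact Hk. simpl cnt. rewrite plus_INR.
  destruct Nat.eqb; simpl; ring.
Qed.

Lemma run_service_step tau m :
  fsum M (fun k => dS X (S tau) k * sched k m) - fsum M (fun k => dS X tau k * sched k m)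
  = sched (sigma tau) m.
Proof.
  rewrite <- fsum_minus, <- (fsum_indicator M (sigma tau) (fun k => sched k m)) by apply (run_sched_lt HX).
  apply fsum_ext; intros k Hk. rewrite <- run_S_step by exact Hk. ring.
Qed.

Lemma run_queue_step tau n : (n < N)%nat ->
  dQ X (S tau) n = dQ X tau n + (dA X (S tau) n - dA X tau n)
    - IminusRT N Rm (fun m => sched (sigma tau) m - Rmax 0 (sched (sigma tau) m - dQ X tau m)) n.
Proof.
  intros Hn. rewrite (run_queue HX (S tau) n Hn), (run_queue HX tau n Hn).
  set (V := fun tau m => fsum M (fun k => dS X tau k * sched k m) - dY X tau m).
  assert (Hstep : forall m, (m < N)%nat ->
    sched (sigma tau) m - Rmax 0 (sched (sigma tau) m - dQ X tau m) = 1 * V (S tau) m + (-1) * V tau m).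
  { intros m Hm. unfold V. rewrite <- (run_Y_step HX) by exact Hm. rewrite <- run_service_step. ring. }
  rewrite (IminusRT_ext N Rm _ _ n Hstep Hn), IminusRT_lin. unfold V. ring.
Qed.

Lemma run_queue_nonneg tau n : (n < N)%nat -> 0 <= dQ X tau n.
Proof.
  revert n. induction tau as [|tau IH]; intros n Hn; [apply (run_Q0_nonneg HX); auto|].
  rewrite run_queue_step by exact Hn.
  (* the served amount [min(pi_m, Q_m)] lies in [0, Q_m] *)
  set (w := fun m => sched (sigma tau) m - Rmax 0 (sched (sigma tau) m - dQ X tau m)).
  unfold IminusRT.
  assert (Hw : forall m, (m < N)%nat -> 0 <= w m <= dQ X tau m).
  { intros m Hm. unfold w. pose proof (IH m Hm).
    pose proof (network_sched_nonneg _ _ _ _ _ Hok (sigma tau) m (run_sched_lt HX tau) Hm).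
    unfold Rmax; destruct Rle_dec; lra. }
  assert (0 <= fsum N (fun m => Rm m n * w m)).
  { apply fsum_nonneg; intros m Hm.
    pose proof (network_routing_bounds _ _ _ _ _ Hok m n Hm Hn). pose proof (Hw m Hm). nra. }
  pose proof ((run_A_mono HX) tau n Hn). pose proof (Hw n Hn). lra.
Qed.

Lemma run_Y_increment tau n : (n < N)%nat -> 0 <= dY X (S tau) n - dY X tau n <= L.
Proof.
  intros Hn. rewrite (run_Y_step HX) by exact Hn. pose proof (run_queue_nonneg tau n Hn).
  pose proof (sched_le_bound _ _ _ _ _ Hok (sigma tau) n (run_sched_lt HX tau) Hn).
  unfold Rmax; destruct Rle_dec; lra.
Qed.

Lemma run_S_increment tau k : (k < M)%nat -> 0 <= dS X (S tau) k - dS X tau k <= L.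
Proof.
  intros Hk. rewrite run_S_step by exact Hk. pose proof (sched_bound_ge1 _ _ _ _ _ Hok).
  destruct Nat.eqb; lra.
Qed.

Lemma run_S0 k : (k < M)%nat -> dS X 0%nat k = 0.
Proof. intros Hk. rewrite (run_S_count HX) by exact Hk. reflexivity. Qed.

Lemma run_S_sum tau : fsum M (fun k => dS X tau k) = INR tau.
Proof.
  induction tau as [|tau IH].
  - apply fsum_zero. apply run_S0.
  - rewrite (fsum_ext M _ (fun k => dS X tau k + (if Nat.eqb (sigma tau) k then 1 else 0) * 1)).
    + rewrite fsum_plus, fsum_indicator, S_INR, <- IH by apply (run_sched_lt HX). reflexivity.
    + intros k Hk. rewrite <- run_S_step by exact Hk. ring.
Qed.

Lemma run_Y_le_service tau n : (n < N)%nat -> dY X tau n <= fsum M (fun k => dS X tau k * sched k n).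
Proof.
  intros Hn. induction tau as [|tau IH].
  - rewrite (run_Y0 HX) by exact Hn. rewrite fsum_zero; [lra|]. intros k Hk. rewrite run_S0 by exact Hk. ring.
  - pose proof (run_service_step tau n). pose proof ((run_Y_step HX) tau n Hn).
    pose proof (run_queue_nonneg tau n Hn).
    assert (Rmax 0 (sched (sigma tau) n - dQ X tau n) <= sched (sigma tau) n)
      by (pose proof (network_sched_nonneg _ _ _ _ _ Hok (sigma tau) n (run_sched_lt HX tau) Hn);
          unfold Rmax; destruct Rle_dec; lra).
    lra.
Qed.

Lemma run_Y_flat tau n : (n < N)%nat -> sched (sigma tau) n <= dQ X tau n -> dY X (S tau) n = dY X tau n.
Proof.
  intros Hn Hq. pose proof ((run_Y_step HX) tau n Hn) as Hstep. unfold Rmax in Hstep; destruct Rle_dec; lra.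
Qed.

Lemma run_S_flat tau k : (k < M)%nat -> sigma tau <> k -> dS X (S tau) k = dS X tau k.
Proof. intros Hk Hne. pose proof (run_S_step tau k Hk). destruct (Nat.eqb_spec (sigma tau) k); [easy | lra]. Qed.

Lemma run_not_chosen tau j l kappa : (j < M)%nat -> (l < M)%nat -> 0 <= kappa ->
  weight N Rm f (sched j) (fun n => kappa * dQ X tau n) < weight N Rm f (sched l) (fun n => kappa * dQ X tau n) ->
  sigma tau <> j.
Proof.
  intros Hj Hl Hkappa Hlt Hsig.
  assert (Hmax : forall l', (l' < M)%nat ->
    weight N Rm f (sched l') (dQ X tau) <= weight N Rm f (sched j) (dQ X tau))
    by (intros l' Hl'; rewrite <- Hsig; apply (run_MW HX); auto).
  pose proof (network_argmax_scale _ _ _ _ _ Hok (dQ X tau) j kappa l (run_queue_nonneg tau) Hj Hl Hkappa Hmax).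
  lra.
Qed.

End SamplePath.

(** * Fluid scaling of a sample path *)

Lemma interp_at_nat g (k : nat) v : interp_at g (INR k) v -> v = g k.
Proof. intros H. rewrite (H k) by lra. ring. Qed.

Lemma interp_at_floor g u v : 0 <= u -> interp_at g u v ->
  exists k : nat, INR k <= u < INR k + 1 /\ v = g k + (u - INR k) * (g (S k) - g k).
Proof. intros Hu H. destruct (floor_nat u Hu) as [k Hk]. exists k. split; auto. apply H; lra. Qed.

Lemma increments_bound g L : (forall k, 0 <= g (S k) - g k <= L) ->
  forall k j, (k <= j)%nat -> 0 <= g j - g k <= L * (INR j - INR k).
Proof.
  intros H k j Hkj. induction Hkj as [|j Hkj IH]; [split; ring_simplify; lra|].
  rewrite S_INR. specialize (H j). lra.
Qed.

Lemma interp_at_increment g L u u' v v' : (forall k, 0 <= g (S k) - g k <= L) ->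
  0 <= u -> u <= u' -> interp_at g u v -> interp_at g u' v' -> 0 <= v' - v <= L * (u' - u).
Proof.
  intros H Hu Huu' Hv Hv'.
  destruct (interp_at_floor g u v Hu Hv) as [k [Hk ->]].
  destruct (interp_at_floor g u' v' ltac:(lra) Hv') as [j [Hj ->]].
  pose proof (H k). pose proof (H j). destruct (le_lt_dec j k) as [Hjk | Hkj].
  - assert (j = k) as ->; [|nra].
    assert (k < S j)%nat by (apply INR_lt; rewrite S_INR; lra). lia.
  - pose proof (increments_bound g L H (S k) j Hkj) as Hb. rewrite S_INR in Hb. nra.
Qed.

Lemma interp_at_flat g a b u u' v v' : 0 <= a ->
  (forall tau : nat, a - 1 < INR tau <= b -> g (S tau) = g tau) ->
  a <= u <= b -> a <= u' <= b -> interp_at g u v -> interp_at g u' v' -> v = v'.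
Proof.
  intros Ha Hflat Hu Hu' Hv Hv'.
  destruct (interp_at_floor g u v ltac:(lra) Hv) as [k [Hk ->]].
  destruct (interp_at_floor g u' v' ltac:(lra) Hv') as [j [Hj ->]].
  rewrite (Hflat k), (Hflat j) by lra. ring_simplify.
  assert (Hconst : forall k j, (k <= j)%nat -> a < INR k + 1 -> INR j <= b -> g j = g k).
  { intros k0 j0 Hkj. induction Hkj as [|j0 Hkj IH]; intros Hk0 Hj0; [reflexivity|].
    pose proof (le_INR _ _ Hkj). rewrite S_INR in Hj0. rewrite Hflat by lra. apply IH; lra. }
  destruct (le_lt_dec k j); [symmetry; apply Hconst | apply Hconst]; auto; try lra; lia.
Qed.

Lemma scaled_interp_flat T z (g : nat -> R) (p : R -> R) t eta :
  0 < eta -> 1 <= z * eta -> 0 <= t - eta -> t + eta <= T ->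
  (forall u, 0 <= u <= T -> interp_at g (z * u) (z * p u)) ->
  (forall tau : nat, z * (t - 2 * eta) <= INR tau <= z * (t + eta) -> g (S tau) = g tau) ->
  forall u, t - eta <= u <= t + eta -> p u = p t.
Proof.
  intros Heta Hzeta Ht1 Ht2 Hp Hflat u Hu.
  assert (Hz : 0 < z) by nra.
  apply Rmult_eq_reg_l with z; [|lra].
  apply (interp_at_flat g (z * (t - eta)) (z * (t + eta)) (z * u) (z * t)); try (apply Hp; lra).
  - nra.
  - intros tau Htau. apply Hflat. nra.
  - split; apply Rmult_le_compat_l; lra.
  - split; apply Rmult_le_compat_l; lra.
Qed.

(* joint coordinates [y; s; q(0)], so that a single compactness argument extracts all three limits *)
Definition stacked (N M : nat) (x : fpath) (i : nat) (t : R) : R :=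
  if i <? N then fy x t i else if i <? N + M then fs x t (i - N) else fq x 0 (i - (N + M)).

Section FluidPath.
Variables (N M : nat) (sched Rm : nat -> nat -> R) (f : R -> R) (T z : R).
Variables (X : dpath) (sigma : nat -> nat) (x : fpath).
Hypothesis Hok : network_ok N M sched Rm f.
Hypothesis HX : MW_run N M sched Rm f X sigma.
Hypothesis Hfl : is_fluid_scaling N M T X z x.
Hypothesis Hz : 1 <= z.
Hypothesis HT : 0 <= T.
Local Notation L := (sched_bound N M sched).

Lemma fluid_convex_at t : 0 <= t <= T -> exists (k : nat) th, 0 <= th <= 1 /\ z * t = INR k + th /\
  (forall n, (n < N)%nat ->
     z * fq x t n = (1 - th) * dQ X k n + th * dQ X (S k) n /\
     z * fa x t n = (1 - th) * dA X k n + th * dA X (S k) n /\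
     z * fy x t n = (1 - th) * dY X k n + th * dY X (S k) n) /\
  (forall j, (j < M)%nat -> z * fs x t j = (1 - th) * dS X k j + th * dS X (S k) j).
Proof.
  intros Ht. destruct (floor_nat (z * t) ltac:(nra)) as [k Hk].
  exists k, (z * t - INR k). split; [lra|]. split; [ring|].
  destruct (Hfl t Ht) as [Hn Hj]. split.
  - intros n Hn'. destruct (Hn n Hn') as (Hq & Ha & Hy).
    rewrite (Hq k), (Ha k), (Hy k) by lra. repeat split; ring.
  - intros j Hj'. rewrite (Hj j Hj' k) by lra. ring.
Qed.

Lemma fluid_at_nat (tau : nat) t : 0 <= t <= T -> z * t = INR tau ->
  (forall n, (n < N)%nat -> z * fq x t n = dQ X tau n /\ z * fy x t n = dY X tau n) /\
  (forall j, (j < M)%nat -> z * fs x t j = dS X tau j).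
Proof.
  intros Ht Htau. destruct (Hfl t Ht) as [Hn Hj]. rewrite Htau in Hn, Hj. split.
  - intros n Hn'. destruct (Hn n Hn') as (Hq & _ & Hy).
    split; [apply (interp_at_nat (fun tau => dQ X tau n)) | apply (interp_at_nat (fun tau => dY X tau n))]; auto.
  - intros j Hj'. apply (interp_at_nat (fun tau => dS X tau j)); auto.
Qed.

Lemma fluid_q_nonneg t n : 0 <= t <= T -> (n < N)%nat -> 0 <= fq x t n.
Proof.
  intros Ht Hn. destruct (fluid_convex_at t Ht) as (k & th & Hth & _ & Hq & _).
  destruct (Hq n Hn) as [Eq _].
  pose proof (run_queue_nonneg _ _ _ _ _ _ _ Hok HX k n Hn).
  pose proof (run_queue_nonneg _ _ _ _ _ _ _ Hok HX (S k) n Hn). nra.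
Qed.

Lemma fluid_y_increment t t' n : 0 <= t -> t <= t' -> t' <= T -> (n < N)%nat ->
  0 <= fy x t' n - fy x t n <= L * (t' - t).
Proof.
  intros H0 H1 H2 Hn.
  destruct (Hfl t ltac:(lra)) as [Ha _]. destruct (Hfl t' ltac:(lra)) as [Hb _].
  destruct (Ha n Hn) as (_ & _ & Hy). destruct (Hb n Hn) as (_ & _ & Hy').
  pose proof (interp_at_increment _ L (z * t) (z * t') _ _
    (fun k => run_Y_increment _ _ _ _ _ _ _ Hok HX k n Hn) ltac:(nra) ltac:(nra) Hy Hy').
  split; nra.
Qed.

Lemma fluid_s_increment t t' j : 0 <= t -> t <= t' -> t' <= T -> (j < M)%nat ->
  0 <= fs x t' j - fs x t j <= L * (t' - t).
Proof.
  intros H0 H1 H2 Hj.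
  destruct (Hfl t ltac:(lra)) as [_ Ha]. destruct (Hfl t' ltac:(lra)) as [_ Hb].
  pose proof (interp_at_increment _ L (z * t) (z * t') _ _
    (fun k => run_S_increment _ _ _ _ _ _ _ Hok HX k j Hj) ltac:(nra) ltac:(nra) (Ha j Hj) (Hb j Hj)).
  split; nra.
Qed.

Lemma fluid_y0 n : (n < N)%nat -> fy x 0 n = 0.
Proof.
  intros Hn. destruct (fluid_at_nat 0 0 ltac:(lra) ltac:(simpl; ring)) as [Hat0 _].
  destruct (Hat0 n Hn) as [_ Hy]. rewrite (run_Y0 HX) in Hy by exact Hn. nra.
Qed.

Lemma fluid_s0 j : (j < M)%nat -> fs x 0 j = 0.
Proof.
  intros Hj. destruct (fluid_at_nat 0 0 ltac:(lra) ltac:(simpl; ring)) as [_ Hat0].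
  pose proof (Hat0 j Hj) as Hs. rewrite (run_S0 _ _ _ _ _ _ _ HX) in Hs by exact Hj. nra.
Qed.

Lemma fluid_y_le_service t n : 0 <= t <= T -> (n < N)%nat ->
  fy x t n <= fsum M (fun j => fs x t j * sched j n).
Proof.
  intros Ht Hn. destruct (fluid_convex_at t Ht) as (k & th & Hth & _ & Hq & Hs).
  destruct (Hq n Hn) as (_ & _ & Ey).
  pose proof (fsum_scaled_convex M z th _ _ _ (fun j => sched j n) Hs) as E.
  pose proof (run_Y_le_service _ _ _ _ _ _ _ Hok HX k n Hn).
  pose proof (run_Y_le_service _ _ _ _ _ _ _ Hok HX (S k) n Hn).
  apply Rmult_le_reg_l with z; [lra|]. rewrite Ey, E. nra.
Qed.

Lemma fluid_s_sum t : 0 <= t <= T -> fsum M (fun j => fs x t j) = t.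
Proof.
  intros Ht. destruct (fluid_convex_at t Ht) as (k & th & Hth & Hzt & _ & Hs).
  pose proof (fsum_scaled_convex M z th _ _ _ (fun _ => 1) Hs) as E.
  assert (Hsum : forall tau, fsum M (fun j => dS X tau j * 1) = INR tau).
  { intros tau. rewrite <- (run_S_sum _ _ _ _ _ _ _ HX tau). apply fsum_ext; intros; ring. }
  rewrite !Hsum, S_INR in E.
  apply Rmult_eq_reg_l with z; [|lra].
  rewrite (fsum_ext M _ (fun j => fs x t j * 1)), E by (intros; ring). lra.
Qed.

Lemma fluid_queue t n : 0 <= t <= T -> (n < N)%nat ->
  fq x t n = fq x 0 n + fa x t n
    - IminusRT N Rm (fun m => fsum M (fun j => fs x t j * sched j m) - fy x t m) n.
Proof.
  intros Ht Hn. set (v := fun m => fsum M (fun j => fs x t j * sched j m) - fy x t m).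
  destruct (fluid_convex_at t Ht) as (k & th & Hth & _ & Hq & Hs).
  destruct (Hq n Hn) as (Eq & Ea & _).
  destruct (fluid_at_nat 0 0 ltac:(lra) ltac:(simpl; ring)) as [Hat0 _]. destruct (Hat0 n Hn) as [Eq0 _].
  set (V := fun tau m => fsum M (fun j => dS X tau j * sched j m) - dY X tau m).
  assert (Ev : IminusRT N Rm (fun m => (1 - th) * V k m + th * V (S k) m) n = z * IminusRT N Rm v n).
  { rewrite <- (Rplus_0_r (z * _)), <- (Rmult_0_l (IminusRT N Rm v n)), <- IminusRT_lin.
    apply IminusRT_ext; auto. intros m Hm. destruct (Hq m Hm) as (_ & _ & Ey).
    unfold V, v.
    assert (z * fsum M (fun j => fs x t j * sched j m)
      = (1 - th) * fsum M (fun j => dS X k j * sched j m) + th * fsum M (fun j => dS X (S k) j * sched j m))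
      by exact (fsum_scaled_convex M z th _ _ _ (fun j => sched j m) Hs).
    nra. }
  rewrite IminusRT_lin in Ev. fold V in Ev.
  apply Rmult_eq_reg_l with z; [|lra].
  rewrite Rmult_minus_distr_l, Rmult_plus_distr_l, <- Ev, Eq, Ea, Eq0,
    (run_queue HX k n Hn), (run_queue HX (S k) n Hn). fold (V k) (V (S k)). ring.
Qed.

Lemma fluid_Q_at (tau : nat) n : INR tau <= z * T -> (n < N)%nat -> dQ X tau n = z * fq x (INR tau / z) n.
Proof.
  intros Htau Hn. pose proof (pos_INR tau).
  assert (Ht : 0 <= INR tau / z <= T).
  { split; [apply Rmult_le_pos; [lra | apply Rlt_le, Rinv_0_lt_compat; lra]|].
    apply Rmult_le_reg_l with z; [lra|]. replace (z * (INR tau / z)) with (INR tau) by (field; lra). lra. }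
  destruct (fluid_at_nat tau _ Ht ltac:(field; lra)) as [Hq _]. symmetry. apply Hq; auto.
Qed.

Lemma stacked_bound K i t : (forall n, (n < N)%nat -> Rabs (fq x 0 n) <= K) ->
  (i < N + M + N)%nat -> 0 <= t <= T -> Rabs (stacked N M x i t) <= Rmax (L * T) K.
Proof.
  intros HK Hi Ht. unfold stacked. pose proof (Rmax_l (L * T) K). pose proof (sched_bound_ge1 _ _ _ _ _ Hok).
  destruct (Nat.ltb_spec i N) as [HiN |]; [|destruct (Nat.ltb_spec i (N + M))].
  - pose proof (fluid_y_increment 0 t i ltac:(lra) ltac:(lra) ltac:(lra) HiN) as Hy.
    rewrite fluid_y0 in Hy by exact HiN. apply Rabs_le_iff. nra.
  - pose proof (fluid_s_increment 0 t (i - N) ltac:(lra) ltac:(lra) ltac:(lra) ltac:(lia)) as Hs.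
    rewrite fluid_s0 in Hs by lia. apply Rabs_le_iff. nra.
  - eapply Rle_trans; [apply HK; lia | apply Rmax_r].
Qed.

Lemma stacked_lipschitz i t t' : 0 <= t <= T -> 0 <= t' <= T ->
  Rabs (stacked N M x i t - stacked N M x i t') <= L * Rabs (t - t').
Proof.
  intros Ht Ht'. unfold stacked. pose proof (sched_bound_ge1 _ _ _ _ _ Hok).
  destruct (Nat.ltb_spec i N) as [HiN |]; [|destruct (Nat.ltb_spec i (N + M))].
  - apply (Rabs_le_mono_lip (fun u => fy x u i) T); auto. intros; apply fluid_y_increment; auto.
  - apply (Rabs_le_mono_lip (fun u => fs x u (i - N)) T); auto. intros; apply fluid_s_increment; auto; lia.
  - rewrite Rminus_diag, Rabs_R0. pose proof (Rabs_pos (t - t')). nra.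
Qed.

End FluidPath.

Lemma service_diff_bound M (sched : nat -> nat -> R) L (a b : nat -> R) m d :
  (forall j, (j < M)%nat -> 0 <= sched j m <= L) -> (forall j, (j < M)%nat -> Rabs (a j - b j) <= d) ->
  Rabs (fsum M (fun j => a j * sched j m) - fsum M (fun j => b j * sched j m)) <= INR M * (d * L).
Proof.
  intros Hs Hab. rewrite <- fsum_minus. apply fsum_abs_le. intros j Hj.
  replace (a j * sched j m - b j * sched j m) with ((a j - b j) * sched j m) by ring.
  rewrite Rabs_mult, (Rabs_right (sched j m)) by (apply Rle_ge, Hs; auto).
  pose proof (Hs j Hj). pose proof (Hab j Hj). pose proof (Rabs_pos (a j - b j)). nra.
Qed.

Lemma queue_diff_bound N M (sched Rm : nat -> nat -> R) L n q0 q0' a a' (s s' y y' : nat -> R) dq da ds dy :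
  (n < N)%nat -> (forall m, (m < N)%nat -> 0 <= Rm m n <= 1) ->
  (forall j m, (j < M)%nat -> (m < N)%nat -> 0 <= sched j m <= L) ->
  Rabs (q0 - q0') <= dq -> Rabs (a - a') <= da ->
  (forall j, (j < M)%nat -> Rabs (s j - s' j) <= ds) -> (forall m, (m < N)%nat -> Rabs (y m - y' m) <= dy) ->
  Rabs ((q0 + a - IminusRT N Rm (fun m => fsum M (fun j => s j * sched j m) - y m) n)
        - (q0' + a' - IminusRT N Rm (fun m => fsum M (fun j => s' j * sched j m) - y' m) n))
  <= dq + da + (1 + INR N) * (INR M * (ds * L) + dy).
Proof.
  intros Hn HR Hs Hq Ha Hsd Hyd.
  set (v := fun m => fsum M (fun j => s j * sched j m) - y m).
  set (v' := fun m => fsum M (fun j => s' j * sched j m) - y' m).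
  assert (HI : Rabs (IminusRT N Rm (fun m => 1 * v m + (-1) * v' m) n)
               <= (1 + INR N) * (INR M * (ds * L) + dy)).
  { apply IminusRT_bound; auto. intros m Hm.
    replace (1 * v m + -1 * v' m) with ((fsum M (fun j => s j * sched j m) - fsum M (fun j => s' j * sched j m))
      - (y m - y' m)) by (unfold v, v'; ring).
    eapply Rle_trans; [unfold Rminus at 1; apply Rabs_triang|]. rewrite Rabs_Ropp.
    apply Rplus_le_compat; [apply service_diff_bound; auto | apply Hyd; auto]. }
  rewrite IminusRT_lin in HI.
  apply Rabs_le_iff in Hq, Ha, HI. apply Rabs_le_iff. lra.
Qed.

Lemma derivable_flat_zero g t l eta : derivable_pt_lim g t l -> 0 < eta ->
  (forall u, t - eta <= u <= t + eta -> g u = g t) -> l = 0.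
Proof.
  intros Hd Heta Hflat. destruct (Req_dec l 0) as [| Hl]; [assumption | exfalso].
  destruct (Hd (Rabs l) (Rabs_pos_lt l Hl)) as [[d Hdpos] Hdd]. simpl in Hdd.
  set (h := Rmin d eta / 2).
  assert (0 < Rmin d eta) by (apply Rmin_glb_lt; auto).
  assert (Hh : Rabs h < d) by (unfold h; rewrite Rabs_right by lra; pose proof (Rmin_l d eta); lra).
  specialize (Hdd h ltac:(unfold h; lra) Hh).
  rewrite Hflat in Hdd by (unfold h; pose proof (Rmin_r d eta); lra).
  replace ((g t - g t) / h - l) with (- l) in Hdd by (field; unfold h; lra).
  rewrite Rabs_Ropp in Hdd. lra.
Qed.

Lemma lipschitz_abs_cont (g : R -> R) T Lg : 0 <= Lg ->
  (forall t t', 0 <= t <= T -> 0 <= t' <= T -> Rabs (g t - g t') <= Lg * Rabs (t - t')) ->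
  abs_cont g 0 T.
Proof.
  intros HL H e He. exists (e / (Lg + 1)). split; [apply Rdiv_lt_0_compat; lra|].
  intros m u v Hm Hu0 Huv Hvu Hvm Hs.
  assert (Hu : forall i, (i < m)%nat -> 0 <= u i).
  { induction i; intros Hi; auto.
    assert (v i <= u (S i)) by (apply Hvu; lia). assert (u i <= v i) by (apply Huv; lia).
    assert (0 <= u i) by (apply IHi; lia). lra. }
  assert (Hv : forall j i, (i + j = pred m)%nat -> v i <= T).
  { induction j; intros i Hij; [replace i with (pred m) by lia; auto|].
    assert (v i <= u (S i)) by (apply Hvu; lia). assert (u (S i) <= v (S i)) by (apply Huv; lia).
    assert (v (S i) <= T) by (apply IHj; lia). lra. }
  apply Rle_lt_trans with (fsum m (fun i => Lg * (v i - u i))).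
  - apply fsum_le. intros i Hi. pose proof (Huv i Hi). pose proof (Hu i Hi).
    assert (v i <= T) by (apply (Hv (pred m - i)%nat); lia).
    rewrite <- (Rabs_right (v i - u i)) by lra. apply H; lra.
  - rewrite fsum_scal. apply Rle_lt_trans with (Lg * (e / (Lg + 1))); [apply Rmult_le_compat_l; lra|].
    apply Rmult_lt_reg_r with (Lg + 1); [lra|].
    replace (Lg * (e / (Lg + 1)) * (Lg + 1)) with (Lg * e) by (field; lra). nra.
Qed.

Lemma derivable_nonneg_continuous f x e : derivable_on_nonneg f -> 0 <= x -> 0 < e ->
  exists r, 0 < r /\ forall y, 0 <= y -> Rabs (y - x) <= r -> Rabs (f y - f x) <= e.
Proof.
  intros Hf Hx He. destruct (Hf x Hx) as [l Hl]. destruct (Hl 1 ltac:(lra)) as [d [Hd Hdd]].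
  assert (Hl1 : 0 < Rabs l + 1) by (pose proof (Rabs_pos l); lra).
  exists (Rmin (d / 2) (e / (Rabs l + 1))). split; [apply Rmin_glb_lt; [lra | apply Rdiv_lt_0_compat; lra]|].
  intros y Hy Hyx. destruct (Req_dec y x) as [-> | Hne]; [rewrite Rminus_diag, Rabs_R0; lra|].
  pose proof (Rmin_l (d / 2) (e / (Rabs l + 1))). pose proof (Rmin_r (d / 2) (e / (Rabs l + 1))).
  specialize (Hdd (y - x) ltac:(lra) ltac:(lra) ltac:(lra)). replace (x + (y - x)) with y in Hdd by ring.
  assert (Hq : Rabs ((f y - f x) / (y - x)) <= Rabs l + 1).
  { pose proof (Rabs_triang ((f y - f x) / (y - x) - l) l) as Htri.
    replace ((f y - f x) / (y - x) - l + l) with ((f y - f x) / (y - x)) in Htri by ring. lra. }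
  replace (f y - f x) with ((f y - f x) / (y - x) * (y - x)) by (field; lra).
  rewrite Rabs_mult. apply Rle_trans with ((Rabs l + 1) * (e / (Rabs l + 1))); [|right; field; lra].
  apply Rmult_le_compat; auto using Rabs_pos. lra.
Qed.

Lemma finite_common_radius (N : nat) (P : nat -> R -> Prop) :
  (forall n r r', 0 < r' <= r -> P n r -> P n r') ->
  (forall n, (n < N)%nat -> exists r, 0 < r /\ P n r) ->
  exists r, 0 < r /\ forall n, (n < N)%nat -> P n r.
Proof.
  intros Hmono. induction N as [|N IH]; intros H; [exists 1; split; [lra | intros; lia]|].
  destruct IH as [r1 [Hr1 H1]]; [intros; apply H; lia|].
  destruct (H N ltac:(lia)) as [r2 [Hr2 H2]].
  exists (Rmin r1 r2). split; [apply Rmin_glb_lt; auto|]. intros n Hn.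
  pose proof (Rmin_l r1 r2). pose proof (Rmin_r r1 r2). pose proof (Rmin_glb_lt r1 r2 0 Hr1 Hr2).
  destruct (Nat.eq_dec n N) as [-> | Hne].
  - apply (Hmono N r2); [lra | exact H2].
  - apply (Hmono n r1); [lra | apply H1; lia].
Qed.

Lemma weight_diff_bound N Rm f pi q q' Lpi e : (forall n m, (n < N)%nat -> (m < N)%nat -> 0 <= Rm n m <= 1) ->
  (forall n, (n < N)%nat -> Rabs (pi n) <= Lpi) -> (forall n, (n < N)%nat -> Rabs (f (q' n) - f (q n)) <= e) ->
  Rabs (weight N Rm f pi q' - weight N Rm f pi q) <= INR N * (Lpi * ((1 + INR N) * e)).
Proof.
  intros HR Hpi Hf. unfold weight. rewrite <- fsum_minus. apply fsum_abs_le. intros n Hn.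
  replace (pi n * (f (q' n) - fsum N (fun m => Rm n m * f (q' m))) - pi n * (f (q n) - fsum N (fun m => Rm n m * f (q m))))
   with (pi n * ((f (q' n) - f (q n)) - fsum N (fun m => Rm n m * (f (q' m) - f (q m)))))
   by (rewrite (fsum_ext N (fun m => Rm n m * (f (q' m) - f (q m))) (fun m => Rm n m * f (q' m) - Rm n m * f (q m)))
         by (intros; ring); rewrite fsum_minus; ring).
  rewrite Rabs_mult. apply Rmult_le_compat; auto using Rabs_pos.
  assert (Rabs (fsum N (fun m => Rm n m * (f (q' m) - f (q m)))) <= INR N * e).
  { apply fsum_abs_le. intros m Hm. rewrite Rabs_mult, (Rabs_right (Rm n m)) by (apply Rle_ge, HR; auto).
    pose proof (HR n m Hn Hm). pose proof (Hf m Hm). pose proof (Rabs_pos (f (q' m) - f (q m))). nra. }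
  pose proof (Hf n Hn). eapply Rle_trans; [unfold Rminus at 1; apply Rabs_triang|]. rewrite Rabs_Ropp. lra.
Qed.

Lemma weight_continuous N Rm f pi q Lpi e : derivable_on_nonneg f ->
  (forall n m, (n < N)%nat -> (m < N)%nat -> 0 <= Rm n m <= 1) ->
  (forall n, (n < N)%nat -> Rabs (pi n) <= Lpi) -> (forall n, (n < N)%nat -> 0 <= q n) -> 0 < e ->
  exists r, 0 < r /\ forall q', (forall n, (n < N)%nat -> 0 <= q' n /\ Rabs (q' n - q n) <= r) ->
    Rabs (weight N Rm f pi q' - weight N Rm f pi q) <= e.
Proof.
  intros Hf HR Hpi Hq He.
  set (C := INR N * (Rabs Lpi * (1 + INR N)) + 1).
  assert (HC : 1 <= C).
  { unfold C. pose proof (pos_INR N). pose proof (Rabs_pos Lpi).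
    assert (0 <= INR N * (Rabs Lpi * (1 + INR N))) by (apply Rmult_le_pos; nra). lra. }
  destruct (finite_common_radius N (fun n r => forall y, 0 <= y -> Rabs (y - q n) <= r -> Rabs (f y - f (q n)) <= e / C))
    as [r [Hr Hrr]].
  { intros n r r' Hr' Hp y Hy Hyr. apply Hp; auto; lra. }
  { intros n Hn. apply derivable_nonneg_continuous; auto. apply Rdiv_lt_0_compat; lra. }
  exists r. split; auto. intros q' Hq'.
  eapply Rle_trans.
  { apply (weight_diff_bound N Rm f pi q q' (Rabs Lpi) (e / C)); auto.
    - intros n Hn. eapply Rle_trans; [apply Hpi; auto | apply Rle_abs].
    - intros n Hn. destruct (Hq' n Hn). apply Hrr; auto. }
  replace (INR N * (Rabs Lpi * ((1 + INR N) * (e / C)))) with ((C - 1) * (e / C)) by (unfold C; ring).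
  apply Rle_trans with (C * (e / C)); [|right; field; lra].
  assert (0 <= e / C) by (apply Rlt_le, Rdiv_lt_0_compat; lra). nra.
Qed.

Lemma weight_gap_persists N Rm f pi rho q Lpi : derivable_on_nonneg f ->
  (forall n m, (n < N)%nat -> (m < N)%nat -> 0 <= Rm n m <= 1) ->
  (forall n, (n < N)%nat -> Rabs (pi n) <= Lpi) -> (forall n, (n < N)%nat -> Rabs (rho n) <= Lpi) ->
  (forall n, (n < N)%nat -> 0 <= q n) -> weight N Rm f pi q < weight N Rm f rho q ->
  exists r, 0 < r /\ forall q', (forall n, (n < N)%nat -> 0 <= q' n /\ Rabs (q' n - q n) <= r) ->
    weight N Rm f pi q' < weight N Rm f rho q'.
Proof.
  intros Hf HR Hpi Hrho Hq Hlt. set (gap := weight N Rm f rho q - weight N Rm f pi q).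
  destruct (weight_continuous N Rm f pi q Lpi (gap / 3) Hf HR Hpi Hq ltac:(unfold gap; lra)) as (r1 & Hr1 & Hw1).
  destruct (weight_continuous N Rm f rho q Lpi (gap / 3) Hf HR Hrho Hq ltac:(unfold gap; lra)) as (r2 & Hr2 & Hw2).
  exists (Rmin r1 r2). split; [apply Rmin_glb_lt; auto|]. intros q' Hq'.
  assert (W1 : Rabs (weight N Rm f pi q' - weight N Rm f pi q) <= gap / 3).
  { apply Hw1. intros n Hn. pose proof (Rmin_l r1 r2). destruct (Hq' n Hn). split; auto; lra. }
  assert (W2 : Rabs (weight N Rm f rho q' - weight N Rm f rho q) <= gap / 3).
  { apply Hw2. intros n Hn. pose proof (Rmin_r r1 r2). destruct (Hq' n Hn). split; auto; lra. }
  apply Rabs_le_iff in W1, W2. unfold gap in *. lra.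
Qed.

Lemma weight_ext N Rm f pi q q' : (forall n, (n < N)%nat -> q n = q' n) ->
  weight N Rm f pi q = weight N Rm f pi q'.
Proof.
  intros H. unfold weight. apply fsum_ext. intros n Hn. rewrite H by exact Hn.
  do 2 f_equal. apply fsum_ext. intros m Hm. rewrite H; auto.
Qed.

Lemma scaled_time_in_window z a b v : 0 < z -> z * a <= v <= z * b -> a <= v / z <= b.
Proof.
  intros Hz Hv. split; apply Rmult_le_reg_l with z; auto;
    replace (z * (v / z)) with v by (field; lra); lra.
Qed.

Lemma flat_limit_deriv_zero T t eta l (z : nat -> R) (D : nat -> nat -> R) (p : nat -> R -> R) (g : R -> R) :
  0 < eta -> 0 <= t - 2 * eta -> t + eta <= T ->
  (forall k u, 0 <= u <= T -> interp_at (D k) (z k * u) (z k * p k u)) ->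
  (forall u, 0 <= u <= T -> Un_cv (fun k => p k u) (g u)) ->
  eventually le (fun k => 1 <= z k * eta /\
    forall tau : nat, z k * (t - 2 * eta) <= INR tau <= z k * (t + eta) -> D k (S tau) = D k tau) ->
  derivable_pt_lim g t l -> l = 0.
Proof.
  intros Heta Ht1 Ht2 Hp Hcv Hflat Hd. apply (derivable_flat_zero g t l eta Hd Heta). intros u Hu.
  apply (Un_cv_eventually_eq (fun k => p k u) (fun k => p k t)); [| apply Hcv; lra ..].
  revert Hflat. apply eventually_mono. intros k [Hz Hk].
  exact (scaled_interp_flat T (z k) (D k) (p k) t eta Heta Hz ltac:(lra) Ht2 (Hp k) Hk u Hu).
Qed.

(** * Fluid limits are fluid model solutions *)

Section FluidLimit.
Variables (N M : nat) (sched Rm : nat -> nat -> R) (f : R -> R) (T K : R) (lam : nat -> R).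
Variables (x : nat -> fpath) (z : nat -> R) (X : nat -> dpath) (sigma : nat -> nat -> nat).
Variables (Q0 : nat -> R) (Yh Sh : nat -> R -> R).
Hypothesis Hok : network_ok N M sched Rm f.
Hypothesis HT : 0 < T.
Hypothesis Hlam : forall n, (n < N)%nat -> 0 <= lam n.
Hypothesis HX : forall k, MW_run N M sched Rm f (X k) (sigma k).
Hypothesis Hfl : forall k, is_fluid_scaling N M T (X k) (z k) (x k).
Hypothesis Hz1 : forall k, 1 <= z k.
Hypothesis Hz : forall B, eventually le (fun k => B <= z k).
Hypothesis HK : forall k n, (n < N)%nat -> Rabs (fq (x k) 0 n) <= K.
Hypothesis Ha : unif_cvg N T (fun k n t => fa (x k) t n) (fun n t => lam n * t).
Hypothesis Hy : unif_cvg N T (fun k n t => fy (x k) t n) Yh.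
Hypothesis Hs : unif_cvg M T (fun k j t => fs (x k) t j) Sh.
Hypothesis Hq0 : forall e, 0 < e -> eventually le (fun k =>
  forall n, (n < N)%nat -> Rabs (fq (x k) 0 n - Q0 n) <= e).
Local Notation L := (sched_bound N M sched).

Let HT0 : 0 <= T := Rlt_le _ _ HT.

Definition fluid_limit : fpath :=
  mkfpath (fun t n => Q0 n + lam n * t - IminusRT N Rm (fun m => fsum M (fun j => Sh j t * sched j m) - Yh m t) n)
          (fun t n => lam n * t) (fun t n => Yh n t) (fun t j => Sh j t).

Local Notation h := fluid_limit.

Lemma limit_y_increment t t' n : 0 <= t -> t <= t' -> t' <= T -> (n < N)%nat ->
  0 <= Yh n t' - Yh n t <= L * (t' - t).
Proof.
  intros H0 H1 H2 Hn. apply (Un_cv_bounds (fun k => fy (x k) t' n - fy (x k) t n)).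
  - intros k. eapply fluid_y_increment; eauto.
  - apply CV_minus; apply (unif_cvg_pointwise _ _ _ _ Hy); auto; lra.
Qed.

Lemma limit_s_increment t t' j : 0 <= t -> t <= t' -> t' <= T -> (j < M)%nat ->
  0 <= Sh j t' - Sh j t <= L * (t' - t).
Proof.
  intros H0 H1 H2 Hj. apply (Un_cv_bounds (fun k => fs (x k) t' j - fs (x k) t j)).
  - intros k. eapply fluid_s_increment; eauto.
  - apply CV_minus; apply (unif_cvg_pointwise _ _ _ _ Hs); auto; lra.
Qed.

Lemma limit_y0 n : (n < N)%nat -> Yh n 0 = 0.
Proof.
  intros Hn. enough (0 <= Yh n 0 <= 0) by lra.
  apply (Un_cv_bounds (fun k => fy (x k) 0 n)); [| apply (unif_cvg_pointwise _ _ _ _ Hy); auto; lra].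
  intros k. erewrite fluid_y0; eauto; lra.
Qed.

Lemma limit_s0 j : (j < M)%nat -> Sh j 0 = 0.
Proof.
  intros Hj. enough (0 <= Sh j 0 <= 0) by lra.
  apply (Un_cv_bounds (fun k => fs (x k) 0 j)); [| apply (unif_cvg_pointwise _ _ _ _ Hs); auto; lra].
  intros k. erewrite fluid_s0; eauto; lra.
Qed.

Lemma limit_y_le_service t n : 0 <= t <= T -> (n < N)%nat -> Yh n t <= fsum M (fun j => Sh j t * sched j n).
Proof.
  intros Ht Hn.
  apply (Rle_cv_lim (Un := fun k => fy (x k) t n) (Vn := fun k => fsum M (fun j => fs (x k) t j * sched j n))).
  - intros k. eapply fluid_y_le_service; eauto.
  - apply (unif_cvg_pointwise _ _ _ _ Hy); auto.
  - apply Un_cv_fsum. intros j Hj. apply CV_mult; [apply (unif_cvg_pointwise _ _ _ _ Hs); auto | apply Un_cv_const].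
Qed.

Lemma limit_s_sum t : 0 <= t <= T -> fsum M (fun j => Sh j t) = t.
Proof.
  intros Ht. enough (t <= fsum M (fun j => Sh j t) <= t) by lra.
  apply (Un_cv_bounds (fun k => fsum M (fun j => fs (x k) t j))).
  - intros k. erewrite fluid_s_sum; eauto; lra.
  - apply Un_cv_fsum. intros j Hj. apply (unif_cvg_pointwise _ _ _ _ Hs); auto.
Qed.

Lemma limit_q0_bound n : (n < N)%nat -> Rabs (Q0 n) <= K.
Proof.
  intros Hn. apply Rle_plus_epsilon. intros e He. destruct (Hq0 e He) as [k Hk].
  specialize (Hk k (le_n k) n Hn). pose proof (HK k n Hn).
  pose proof (Rabs_triang (Q0 n - fq (x k) 0 n) (fq (x k) 0 n)) as Htri. rewrite Rabs_minus_sym in Hk.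
  replace (Q0 n - fq (x k) 0 n + fq (x k) 0 n) with (Q0 n) in Htri by ring. lra.
Qed.

Lemma limit_q_initial n : (n < N)%nat -> fq h 0 n = Q0 n.
Proof.
  intros Hn. simpl. rewrite (IminusRT_ext N Rm _ (fun _ => 0)); [unfold IminusRT; rewrite fsum_zero by (intros; ring); ring | | exact Hn].
  intros m Hm. rewrite limit_y0, fsum_zero by (auto; intros j Hj; rewrite limit_s0 by exact Hj; ring). ring.
Qed.

Lemma limit_q_cvg : unif_cvg N T (fun k n t => fq (x k) t n) (fun n t => fq h t n).
Proof.
  intros e He.
  set (C := 2 + (1 + INR N) * (INR M * L + 1)).
  assert (HC : 1 <= C) by (unfold C; pose proof (pos_INR N); pose proof (pos_INR M);
    pose proof (sched_bound_ge1 _ _ _ _ _ Hok); assert (0 <= INR M * L) by nra; nra).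
  assert (Hd : 0 < e / C) by (apply Rdiv_lt_0_compat; lra).
  pose proof (eventually_and le _ _ nat_le_total_order (Ha _ Hd)
    (eventually_and le _ _ nat_le_total_order (Hy _ Hd)
      (eventually_and le _ _ nat_le_total_order (Hs _ Hd) (Hq0 _ Hd)))) as Hev.
  revert Hev. apply eventually_mono. intros k (Hak & Hyk & Hsk & Hqk) n t Hn Ht.
  erewrite fluid_queue; eauto.
  eapply Rle_trans.
  { simpl. apply (queue_diff_bound N M sched Rm L n _ _ _ _ _ _ _ _ (e / C) (e / C) (e / C) (e / C)).
    - exact Hn.
    - intros m Hm. apply (network_routing_bounds _ _ _ _ _ Hok); auto.
    - intros j m Hj Hm. apply (sched_le_bound _ _ _ _ _ Hok); auto.
    - apply Hqk; auto.
    - apply Hak; auto.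
    - intros j Hj. apply Hsk; auto.
    - intros m Hm. apply Hyk; auto. }
  right. unfold C. field. pose proof (pos_INR N). pose proof (pos_INR M).
  pose proof (sched_bound_ge1 _ _ _ _ _ Hok). assert (0 <= INR M * L) by nra. nra.
Qed.

Lemma limit_q_nonneg t n : 0 <= t <= T -> (n < N)%nat -> 0 <= fq h t n.
Proof.
  intros Ht Hn. apply (Rle_cv_lim (Un := fun _ => 0) (Vn := fun k => fq (x k) t n)).
  - intros k. eapply fluid_q_nonneg; eauto.
  - apply Un_cv_const.
  - apply (unif_cvg_pointwise _ _ _ _ limit_q_cvg); auto.
Qed.

Definition limit_q_lip : R := fsum N lam + (1 + INR N) * (INR M * (L * L) + L).

Lemma limit_q_lip_nonneg : 0 <= limit_q_lip.
Proof.
  unfold limit_q_lip. pose proof (sched_bound_ge1 _ _ _ _ _ Hok). pose proof (pos_INR N). pose proof (pos_INR M).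
  assert (0 <= fsum N lam) by (apply fsum_nonneg; auto).
  assert (0 <= INR M * (L * L)) by (apply Rmult_le_pos; nra). nra.
Qed.

Lemma limit_q_lipschitz t t' n : 0 <= t <= T -> 0 <= t' <= T -> (n < N)%nat ->
  Rabs (fq h t n - fq h t' n) <= limit_q_lip * Rabs (t - t').
Proof.
  intros Ht Ht' Hn. simpl.
  eapply Rle_trans.
  { apply (queue_diff_bound N M sched Rm L n _ _ _ _ _ _ _ _ 0 (lam n * Rabs (t - t')) (L * Rabs (t - t')) (L * Rabs (t - t'))).
    - exact Hn.
    - intros m Hm. apply (network_routing_bounds _ _ _ _ _ Hok); auto.
    - intros j m Hj Hm. apply (sched_le_bound _ _ _ _ _ Hok); auto.
    - rewrite Rminus_diag, Rabs_R0. lra.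
    - rewrite <- Rmult_minus_distr_l, Rabs_mult, (Rabs_right (lam n)) by (apply Rle_ge, Hlam; auto). lra.
    - intros j Hj. apply (Rabs_le_mono_lip (Sh j) T); auto. intros; apply limit_s_increment; auto.
    - intros m Hm. apply (Rabs_le_mono_lip (fun u => Yh m u) T); auto. intros; apply limit_y_increment; auto. }
  assert (lam n <= fsum N lam) by (apply fsum_ge_term; auto).
  pose proof (Rabs_pos (t - t')). pose proof (Hlam n Hn). unfold limit_q_lip. nra.
Qed.

Lemma z_window_eventually eta : 0 < eta -> eventually le (fun k => 1 <= z k * eta).
Proof.
  intros Heta. apply (eventually_mono _ (fun k => 1 / eta <= z k)); [|apply Hz].
  intros k Hk. apply Rmult_le_reg_r with (/ eta); [apply Rinv_0_lt_compat; lra|].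
  rewrite Rmult_assoc, Rinv_r, Rmult_1_r by lra. unfold Rdiv in Hk. lra.
Qed.

Lemma limit_q_window t rho : 0 < t < T -> 0 < rho -> exists eta, 0 < eta /\ 0 <= t - 2 * eta /\ t + eta <= T /\
  forall u n, t - 2 * eta <= u <= t + eta -> (n < N)%nat -> Rabs (fq h u n - fq h t n) <= rho.
Proof.
  intros Ht Hrho. pose proof limit_q_lip_nonneg.
  set (eta := Rmin (t / 2) (Rmin (T - t) (rho / (2 * (limit_q_lip + 1))))).
  assert (E1 : eta <= t / 2) by apply Rmin_l.
  assert (E2 : eta <= T - t) by (eapply Rle_trans; [apply Rmin_r | apply Rmin_l]).
  assert (E3 : eta * (2 * (limit_q_lip + 1)) <= rho).
  { apply Rmult_le_reg_r with (/ (2 * (limit_q_lip + 1))); [apply Rinv_0_lt_compat; lra|].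
    rewrite Rmult_assoc, Rinv_r by lra. eapply Rle_trans; [rewrite Rmult_1_r; apply Rmin_r | apply Rmin_r]. }
  assert (E0 : 0 < eta) by (repeat apply Rmin_glb_lt; try apply Rdiv_lt_0_compat; lra).
  exists eta. repeat split; try lra. intros u n Hu Hn.
  eapply Rle_trans; [apply limit_q_lipschitz; auto; lra|].
  assert (Rabs (u - t) <= 2 * eta) by (apply Rabs_le_iff; lra).
  pose proof (Rabs_pos (u - t)). nra.
Qed.

Lemma limit_y_idle t n l : 0 < t < T -> (n < N)%nat ->
  derivable_pt_lim (fun u => Yh n u) t l -> 0 < fq h t n -> l = 0.
Proof.
  intros Ht Hn Hd Hq. set (q := fq h t n) in Hq.
  destruct (limit_q_window t (q / 4) Ht ltac:(lra)) as (eta & Heta & Ht1 & Ht2 & Hwin).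
  apply (flat_limit_deriv_zero T t eta l z (fun k tau => dY (X k) tau n) (fun k u => fy (x k) u n) (fun u => Yh n u));
    auto.
  - intros k u Hu. apply (Hfl k u Hu); auto.
  - intros u Hu. apply (unif_cvg_pointwise _ _ _ _ Hy); auto.
  - pose proof (eventually_and le _ _ nat_le_total_order (z_window_eventually eta Heta)
      (eventually_and le _ _ nat_le_total_order (Hz (2 * L / q)) (limit_q_cvg (q / 4) ltac:(lra)))) as Hev.
    revert Hev. apply eventually_mono. intros k (Hz_eta & Hz_q & Hqk). split; [exact Hz_eta|].
    assert (Hzk : 0 < z k) by (pose proof (Hz1 k); lra).
    intros tau Htau. apply (run_Y_flat _ _ _ _ _ _ _ (HX k)); auto.
    (* the queue stays above q/2 on the window, and z q/2 exceeds every schedule *)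
    pose proof (scaled_time_in_window _ _ _ _ Hzk Htau) as Hu.
    rewrite (fluid_Q_at _ _ _ _ _ _ (Hfl k) (Hz1 k) tau n) by (auto; nra).
    pose proof (Hwin _ n Hu Hn) as Hnear. pose proof (Hqk n (INR tau / z k) Hn ltac:(lra)) as Hclose.
    apply Rabs_le_iff in Hnear, Hclose. fold q in Hnear.
    pose proof (sched_le_bound _ _ _ _ _ Hok (sigma k tau) n (run_sched_lt (HX k) tau) Hn).
    assert (L <= z k * (q / 2)).
    { apply Rmult_le_reg_r with (2 / q); [apply Rdiv_lt_0_compat; lra|].
      replace (z k * (q / 2) * (2 / q)) with (z k) by (field; lra). unfold Rdiv in *. lra. }
    assert (z k * (q / 2) <= z k * fq (x k) (INR tau / z k) n) by (apply Rmult_le_compat_l; lra).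
    lra.
Qed.

Lemma limit_s_idle t j l : 0 < t < T -> (j < M)%nat ->
  derivable_pt_lim (fun u => Sh j u) t l ->
  (exists l', (l' < M)%nat /\ weight N Rm f (sched j) (fq h t) < weight N Rm f (sched l') (fq h t)) ->
  l = 0.
Proof.
  intros Ht Hj Hd (l' & Hl' & Hw).
  assert (Hpi : forall i, (i < M)%nat -> forall n, (n < N)%nat -> Rabs (sched i n) <= L)
    by (intros i Hi n Hn; pose proof (sched_le_bound _ _ _ _ _ Hok i n Hi Hn); rewrite Rabs_right; lra).
  destruct (weight_gap_persists N Rm f (sched j) (sched l') (fq h t) L (network_f_derivable _ _ _ _ _ Hok)
    (network_routing_bounds _ _ _ _ _ Hok) (Hpi j Hj) (Hpi l' Hl') ltac:(intros; apply limit_q_nonneg; auto; lra) Hw)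
    as (r & Hr & Hgap).
  destruct (limit_q_window t (r / 2) Ht ltac:(lra)) as (eta & Heta & Ht1 & Ht2 & Hwin).
  apply (flat_limit_deriv_zero T t eta l z (fun k tau => dS (X k) tau j) (fun k u => fs (x k) u j) (fun u => Sh j u));
    auto.
  - intros k u Hu. apply (Hfl k u Hu); auto.
  - intros u Hu. apply (unif_cvg_pointwise _ _ _ _ Hs); auto.
  - pose proof (eventually_and le _ _ nat_le_total_order (z_window_eventually eta Heta)
      (limit_q_cvg (r / 2) ltac:(lra))) as Hev.
    revert Hev. apply eventually_mono. intros k (Hz_eta & Hqk). split; [exact Hz_eta|].
    assert (Hzk : 0 < z k) by (pose proof (Hz1 k); lra).
    intros tau Htau. apply (run_S_flat _ _ _ _ _ _ _ (HX k)); auto.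
    (* near q(t), schedule j stays strictly worse than l'; Q(tau)/z is near q(t) *)
    apply (run_not_chosen _ _ _ _ _ _ _ Hok (HX k) tau j l' (/ z k)); auto; [apply Rlt_le, Rinv_0_lt_compat; lra|].
    pose proof (scaled_time_in_window _ _ _ _ Hzk Htau) as Hu.
    assert (Hqb : forall n, (n < N)%nat -> / z k * dQ (X k) tau n = fq (x k) (INR tau / z k) n).
    { intros n Hn. rewrite (fluid_Q_at _ _ _ _ _ _ (Hfl k) (Hz1 k) tau n) by (auto; nra). field. lra. }
    rewrite !(weight_ext N Rm f _ _ _ Hqb). apply Hgap. intros n Hn.
    split; [eapply fluid_q_nonneg; eauto; lra|].
    pose proof (Hwin _ n Hu Hn) as Hnear. pose proof (Hqk n (INR tau / z k) Hn ltac:(lra)) as Hclose.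
    apply Rabs_le_iff in Hnear, Hclose. apply Rabs_le_iff. lra.
Qed.

Lemma fluid_limit_is_FMS : is_FMS N M sched Rm f T lam h.
Proof.
  pose proof (sched_bound_ge1 _ _ _ _ _ Hok) as HL.
  split; [|split; [|split; [|split; [|split; [|split; [|split; [|split; [|split; [|split; [|split]]]]]]]]]]; simpl.
  - intros t n Ht Hn. pose proof (limit_y_increment 0 t n ltac:(lra) ltac:(lra) ltac:(lra) Hn) as Hy0.
    rewrite limit_y0 in Hy0 by exact Hn. pose proof (Hlam n Hn).
    repeat split; [apply limit_q_nonneg | nra | lra]; auto.
  - intros t j Ht Hj. pose proof (limit_s_increment 0 t j ltac:(lra) ltac:(lra) ltac:(lra) Hj) as Hs0.
    rewrite limit_s0 in Hs0 by exact Hj. lra.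
  - intros n Hn. repeat split.
    + apply (lipschitz_abs_cont _ T limit_q_lip limit_q_lip_nonneg). intros. apply limit_q_lipschitz; auto.
    + apply (lipschitz_abs_cont _ T (lam n) (Hlam n Hn)). intros t t' _ _.
      rewrite <- Rmult_minus_distr_l, Rabs_mult, (Rabs_right (lam n)) by (apply Rle_ge, Hlam; auto). lra.
    + apply (lipschitz_abs_cont _ T L ltac:(lra)). intros.
      apply (Rabs_le_mono_lip (fun u => Yh n u) T); auto. intros; apply limit_y_increment; auto.
  - intros j Hj. apply (lipschitz_abs_cont _ T L ltac:(lra)). intros.
    apply (Rabs_le_mono_lip (Sh j) T); auto. intros; apply limit_s_increment; auto.
  - intros t n Ht Hn. pose proof (limit_q_initial n Hn) as Hq. simpl in Hq. rewrite Hq. reflexivity.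
  - reflexivity.
  - exact limit_s_sum.
  - exact limit_y_le_service.
  - intros t1 t2 j H1 H2 H3 Hj. pose proof (limit_s_increment t1 t2 j H1 H2 H3 Hj). lra.
  - intros t1 t2 n H1 H2 H3 Hn. pose proof (limit_y_increment t1 t2 n H1 H2 H3 Hn). lra.
  - intros t n l Ht Hn Hd Hq. exact (limit_y_idle t n l Ht Hn Hd Hq).
  - intros t j l Ht Hj Hd Hw. exact (limit_s_idle t j l Ht Hj Hd Hw).
Qed.

Lemma fluid_limit_close e : 0 < e -> eventually le (fun k => dist_le N M T (x k) h e).
Proof.
  intros He.
  pose proof (eventually_and le _ _ nat_le_total_order (limit_q_cvg e He)
    (eventually_and le _ _ nat_le_total_order (Ha e He)
      (eventually_and le _ _ nat_le_total_order (Hy e He) (Hs e He)))) as Hev.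
  revert Hev. apply eventually_mono. intros k (Hqk & Hak & Hyk & Hsk) t Ht.
  split; [intros n Hn; repeat split | intros j Hj]; [apply Hqk | apply Hak | apply Hyk | apply Hsk]; auto.
Qed.

End FluidLimit.

(** * Compactness of equi-Lipschitz families *)

Definition infinite (A : nat -> Prop) : Prop := forall n, exists k, (n <= k)%nat /\ A k.

Lemma infinite_split (A B : nat -> Prop) :
  infinite A -> infinite (fun k => A k /\ B k) \/ infinite (fun k => A k /\ ~ B k).
Proof.
  intros HA. destruct (classic (infinite (fun k => A k /\ B k))) as [HB | HB]; [now left | right].
  apply not_all_ex_not in HB as [n0 Hn0]. intros n. destruct (HA (Nat.max n n0)) as [k [Hk Ak]].
  exists k. split; [lia|]. split; [exact Ak|]. intros Bk. apply Hn0. exists k. split; [lia | auto].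
Qed.

Lemma infinite_pigeonhole (n : nat) a d (g : nat -> R) (A : nat -> Prop) : 0 <= d -> infinite A ->
  (forall k, A k -> a <= g k <= a + INR n * d) -> exists b, infinite (fun k => A k /\ b <= g k <= b + d).
Proof.
  intros Hd. revert a A. induction n as [|n IH]; intros a A HA Hg.
  - exists a. intros m. destruct (HA m) as [k [Hk Ak]]. exists k. specialize (Hg k Ak). simpl in Hg.
    repeat split; auto; lra.
  - destruct (infinite_split A (fun k => g k <= a + d) HA) as [Hlow | Hhigh].
    + exists a. intros m. destruct (Hlow m) as [k [Hk [Ak Hgk]]]. exists k.
      specialize (Hg k Ak). repeat split; auto; lra.
    + destruct (IH (a + d) _ Hhigh) as [b Hb].
      { intros k [Ak Hgk]. specialize (Hg k Ak). rewrite S_INR in Hg. lra. }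
      exists b. intros m. destruct (Hb m) as [k [Hk [[Ak _] Hgk]]]. exists k. auto.
Qed.

Lemma infinite_cluster {I : Type} (cs : list I) (g : I -> nat -> R) (A : nat -> Prop) d C :
  0 < d -> infinite A -> (forall c k, In c cs -> A k -> Rabs (g c k) <= C) ->
  exists A', (forall k, A' k -> A k) /\ infinite A' /\
    forall c k k', In c cs -> A' k -> A' k' -> Rabs (g c k - g c k') <= d.
Proof.
  intros Hd HA. induction cs as [|c cs IH]; intros Hbd.
  - exists A. repeat split; auto. intros c k k' [].
  - destruct IH as (A1 & Hsub1 & HA1 & Hosc1); [intros; apply Hbd; simpl; auto|].
    destruct (nat_above (2 * C / d)) as [n Hn].
    destruct (infinite_pigeonhole n (- C) d (g c) A1 ltac:(lra) HA1) as [b Hb].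
    { intros k Ak. pose proof (Hbd c k (or_introl eq_refl) (Hsub1 k Ak)) as Hck. apply Rabs_le_iff in Hck.
      assert (2 * C <= INR n * d); [|lra].
      apply Rmult_le_compat_r with (r := d) in Hn; [|lra]. unfold Rdiv in Hn.
      rewrite Rmult_assoc, Rinv_l in Hn by lra. lra. }
    exists (fun k => A1 k /\ b <= g c k <= b + d). split; [intros k [Ak _]; auto|]. split; [exact Hb|].
    intros c' k k' [<- | Hin] [Ak Hk] [Ak' Hk']; [apply Rabs_le_iff; lra | apply Hosc1; auto].
Qed.

Lemma diagonal_subsequence (Rel : nat -> nat -> nat -> Prop) :
  (forall m A, infinite A -> exists A', (forall k, A' k -> A k) /\ infinite A' /\
     forall k k', A' k -> A' k' -> Rel m k k') ->
  exists phi : nat -> nat, (forall k, (phi k < phi (S k))%nat) /\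
    forall m m1 m2, (m <= m1)%nat -> (m <= m2)%nat -> Rel m (phi m1) (phi m2).
Proof.
  intros Hrefine.
  destruct (choice (fun (mA : nat * (nat -> Prop)) A' => infinite (snd mA) ->
      (forall k, A' k -> snd mA k) /\ infinite A' /\ forall k k', A' k -> A' k' -> Rel (fst mA) k k'))
    as [refine Hrefine'].
  { intros [m A]. destruct (classic (infinite A)) as [HA | HA].
    - destruct (Hrefine m A HA) as [A' HA']. exists A'. auto.
    - exists A. intros; contradiction. }
  destruct (choice (fun (An : (nat -> Prop) * nat) k => infinite (fst An) -> (snd An <= k)%nat /\ fst An k))
    as [pick Hpick].
  { intros [A n]. destruct (classic (infinite A)) as [HA | HA].
    - destruct (HA n) as [k Hk]. exists k. auto.
    - exists O. intros; contradiction. }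
  set (As := nat_rect (fun _ => nat -> Prop) (refine (O, fun _ => True)) (fun m Am => refine (S m, Am))).
  assert (HAs : forall m, infinite (As m) /\ forall k k', As m k -> As m k' -> Rel m k k').
  { induction m as [|m [IH _]].
    - assert (Hall : infinite (fun _ => True)) by (intros n; exists n; auto).
      destruct (Hrefine' (O, fun _ => True) Hall) as (_ & ? & ?). auto.
    - destruct (Hrefine' (S m, As m) IH) as (_ & ? & ?). auto. }
  assert (Hnest : forall m m', (m <= m')%nat -> forall k, As m' k -> As m k).
  { intros m m' Hm. induction Hm as [|m' Hm IH]; auto. intros k Hk. apply IH.
    exact (proj1 (Hrefine' (S m', As m') (proj1 (HAs m'))) k Hk). }
  set (phi := nat_rect (fun _ => nat) (pick (As O, O)) (fun m prev => pick (As (S m), S prev))).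
  assert (Hphi : forall m, As m (phi m)).
  { intros [|m]; apply (Hpick (_, _) (proj1 (HAs _))). }
  exists phi. split.
  - intros m. exact (proj1 (Hpick (As (S m), S (phi m)) (proj1 (HAs (S m))))).
  - intros m m1 m2 H1 H2. apply (proj2 (HAs m)); [apply (Hnest m m1) | apply (Hnest m m2)]; auto.
Qed.

Lemma unif_cauchy_cvg P T (G : nat -> nat -> R -> R) :
  (forall e, 0 < e -> exists k0, forall k k', (k0 <= k)%nat -> (k0 <= k')%nat ->
     forall i t, (i < P)%nat -> 0 <= t <= T -> Rabs (G k i t - G k' i t) <= e) ->
  exists g, unif_cvg P T G g.
Proof.
  intros Hcauchy.
  destruct (choice (fun (it : nat * R) l => (fst it < P)%nat -> 0 <= snd it <= T ->
      Un_cv (fun k => G k (fst it) (snd it)) l)) as [lim Hlim].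
  { intros [i t]. destruct (classic ((i < P)%nat /\ 0 <= t <= T)) as [[Hi Ht] | Hout].
    - assert (Hc : Cauchy_crit (fun k => G k i t)).
      { intros e He. destruct (Hcauchy (e / 2) ltac:(lra)) as [k0 Hk0]. exists k0.
        intros k k' Hk Hk'. unfold R_dist. specialize (Hk0 k k' Hk Hk' i t Hi Ht). lra. }
      destruct (R_complete _ Hc) as [l Hl]. exists l. auto.
    - exists 0. intros; exfalso; auto. }
  exists (fun i t => lim (i, t)). intros e He.
  destruct (Hcauchy (e / 2) ltac:(lra)) as [k0 Hk0]. exists k0. intros k Hk i t Hi Ht.
  destruct (Hlim (i, t) Hi Ht (e / 2) ltac:(lra)) as [k1 Hk1]. simpl in Hk1.
  specialize (Hk1 (Nat.max k0 k1) ltac:(lia)). unfold R_dist in Hk1.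
  specialize (Hk0 k (Nat.max k0 k1) Hk ltac:(lia) i t Hi Ht).
  pose proof (Rabs_triang (G k i t - G (Nat.max k0 k1) i t) (G (Nat.max k0 k1) i t - lim (i, t))) as Htri.
  replace (G k i t - G (Nat.max k0 k1) i t + (G (Nat.max k0 k1) i t - lim (i, t)))
    with (G k i t - lim (i, t)) in Htri by ring.
  lra.
Qed.

Section EquiLipschitz.
Variables (P : nat) (F : nat -> nat -> R -> R) (T C L : R).
Hypothesis HT : 0 < T.
Hypothesis HL : 0 <= L.
Hypothesis Hbd : forall k i t, (i < P)%nat -> 0 <= t <= T -> Rabs (F k i t) <= C.
Hypothesis Hlip : forall k i t t', (i < P)%nat -> 0 <= t <= T -> 0 <= t' <= T ->
   Rabs (F k i t - F k i t') <= L * Rabs (t - t').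

Definition grid (m p : nat) : R := T * INR p / (INR m + 1).

Lemma grid_in m p : (p <= S m)%nat -> 0 <= grid m p <= T.
Proof.
  intros Hp. unfold grid. assert (0 < INR m + 1) by (pose proof (pos_INR m); lra).
  assert (INR p <= INR m + 1) by (rewrite <- S_INR; apply le_INR; auto). pose proof (pos_INR p).
  split; [apply Rmult_le_pos; [nra | apply Rlt_le, Rinv_0_lt_compat; auto]|].
  apply Rmult_le_reg_r with (INR m + 1); auto. unfold Rdiv. rewrite Rmult_assoc, Rinv_l by lra. nra.
Qed.

Lemma grid_near m t : 0 <= t <= T -> exists p, (p <= S m)%nat /\ Rabs (t - grid m p) <= T / (INR m + 1).
Proof.
  intros Ht. assert (Hm : 0 < INR m + 1) by (pose proof (pos_INR m); lra).
  set (w := T / (INR m + 1)). assert (Hw : 0 < w) by (apply Rdiv_lt_0_compat; lra).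
  destruct (floor_nat (t / w) ltac:(apply Rmult_le_pos; [lra | apply Rlt_le, Rinv_0_lt_compat; lra]))
    as [p [Hp1 Hp2]].
  assert (Hg : grid m p = INR p * w) by (unfold grid, w; field; lra).
  assert (Hpw : INR p * w <= t < INR p * w + w).
  { split; [apply Rmult_le_reg_r with (/ w) | apply Rmult_lt_reg_r with (/ w)];
      try (apply Rinv_0_lt_compat; lra);
      replace (t * / w) with (t / w) by reflexivity;
      [rewrite Rmult_assoc, Rinv_r, Rmult_1_r by lra; lra |
       replace ((INR p * w + w) * / w) with (INR p + 1) by (field; lra); lra]. }
  exists p. split.
  - apply INR_le. rewrite S_INR.
    assert (INR p * w <= (INR m + 1) * w) by (replace ((INR m + 1) * w) with T by (unfold w; field; lra); lra).
    apply Rmult_le_reg_r with w; lra.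
  - rewrite Hg. apply Rabs_le_iff. lra.
Qed.

Lemma equi_lipschitz_refine d (A : nat -> Prop) : 0 < d -> infinite A ->
  exists A', (forall k, A' k -> A k) /\ infinite A' /\
    forall k k', A' k -> A' k' -> forall i t, (i < P)%nat -> 0 <= t <= T -> Rabs (F k i t - F k' i t) <= d.
Proof.
  intros Hd HA. assert (Hd3 : 0 < d / 3) by lra.
  destruct (inv_succ_small (L * T) (d / 3) Hd3) as [m Hm]. specialize (Hm m (le_n m)).
  destruct (infinite_cluster (list_prod (seq 0 P) (seq 0 (S (S m)))) (fun ip k => F k (fst ip) (grid m (snd ip)))
    A (d / 3) C Hd3 HA) as (A' & Hsub & HA' & Hosc).
  { intros [i p] k Hin _. apply in_prod_iff in Hin as [Hi Hp]. apply in_seq in Hi, Hp.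
    simpl. apply Hbd; [lia | apply grid_in; lia]. }
  exists A'. split; [exact Hsub|]. split; [exact HA'|]. intros k k' Hk Hk' i t Hi Ht.
  destruct (grid_near m t Ht) as [p [Hp Hnear]]. pose proof (grid_in m p Hp) as Hg.
  (* compare F k and F k' through the nearest grid point *)
  pose proof (Hlip k i t (grid m p) Hi Ht Hg) as H1. pose proof (Hlip k' i t (grid m p) Hi Ht Hg) as H2.
  pose proof (Hosc (i, p) k k' ltac:(apply in_prod_iff; split; apply in_seq; lia) Hk Hk') as H3. simpl in H3.
  assert (L * Rabs (t - grid m p) <= d / 3).
  { eapply Rle_trans; [apply Rmult_le_compat_l; [exact HL | exact Hnear]|].
    replace (L * (T / (INR m + 1))) with (L * T / (INR m + 1)) by (field; pose proof (pos_INR m); lra). exact Hm. }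
  apply Rabs_le_iff in H1, H2, H3. apply Rabs_le_iff. lra.
Qed.

Lemma equi_lipschitz_compact : exists phi : nat -> nat, (forall k, (phi k < phi (S k))%nat) /\
  exists Fh, unif_cvg P T (fun k => F (phi k)) Fh.
Proof.
  destruct (diagonal_subsequence (fun m k k' => forall i t, (i < P)%nat -> 0 <= t <= T ->
      Rabs (F k i t - F k' i t) <= 1 / (INR m + 1))) as (phi & Hphi & Hcauchy).
  { intros m A HA. apply equi_lipschitz_refine; auto. apply Rdiv_lt_0_compat; [lra|].
    pose proof (pos_INR m); lra. }
  exists phi. split; [exact Hphi|]. apply unif_cauchy_cvg. intros e He.
  destruct (inv_succ_small 1 e He) as [m Hm]. exists m. intros k k' Hk Hk' i t Hi Ht.
  eapply Rle_trans; [apply (Hcauchy m); auto | apply Hm; lia].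
Qed.

End EquiLipschitz.

(** * Extraction of fluid limits *)

Lemma subsequence_ge (phi : nat -> nat) : (forall k, (phi k < phi (S k))%nat) -> forall k, (k <= phi k)%nat.
Proof. intros H k. induction k as [|k IH]; [lia | specialize (H k); lia]. Qed.

Lemma eventually_subsequence (P : nat -> Prop) (phi : nat -> nat) : (forall k, (k <= phi k)%nat) ->
  eventually le P -> eventually le (fun k => P (phi k)).
Proof. intros Hphi [k0 Hk0]. exists k0. intros k Hk. apply Hk0. specialize (Hphi k). lia. Qed.

Lemma stacked_cvg_components N M T (x : nat -> fpath) (Fh : nat -> R -> R) : 0 <= T ->
  unif_cvg (N + M + N) T (fun k => stacked N M (x k)) Fh ->
  unif_cvg N T (fun k n t => fy (x k) t n) (fun n t => Fh n t) /\
  unif_cvg M T (fun k j t => fs (x k) t j) (fun j t => Fh (N + j)%nat t) /\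
  forall e, 0 < e -> eventually le (fun k =>
    forall n, (n < N)%nat -> Rabs (fq (x k) 0 n - Fh (N + M + n)%nat 0) <= e).
Proof.
  intros HT HF. split; [|split]; intros e He; destruct (HF e He) as [k0 Hk0]; exists k0; intros k Hk.
  - intros n t Hn Ht. specialize (Hk0 k Hk n t ltac:(lia) Ht). unfold stacked in Hk0.
    destruct (Nat.ltb_spec n N); [exact Hk0 | lia].
  - intros j t Hj Ht. specialize (Hk0 k Hk (N + j)%nat t ltac:(lia) Ht). unfold stacked in Hk0.
    destruct (Nat.ltb_spec (N + j) N); [lia|]. destruct (Nat.ltb_spec (N + j) (N + M)); [|lia].
    replace (N + j - N)%nat with j in Hk0 by lia. exact Hk0.
  - intros n Hn. specialize (Hk0 k Hk (N + M + n)%nat 0 ltac:(lia) ltac:(lra)). unfold stacked in Hk0.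
    destruct (Nat.ltb_spec (N + M + n) N); [lia|]. destruct (Nat.ltb_spec (N + M + n) (N + M)); [lia|].
    replace (N + M + n - (N + M))%nat with n in Hk0 by lia. exact Hk0.
Qed.

Lemma fluid_limit_exists N M sched Rm f T K lam (x : nat -> fpath) (z : nat -> R) :
  network_ok N M sched Rm f -> 0 < T -> (forall n, (n < N)%nat -> 0 <= lam n) ->
  (forall k, 1 <= z k) ->
  (forall k, exists X, is_MW_sample_path N M sched Rm f X /\ is_fluid_scaling N M T X (z k) (x k)) ->
  (forall B, eventually le (fun k => B <= z k)) ->
  unif_cvg N T (fun k n t => fa (x k) t n) (fun n t => lam n * t) ->
  (forall k n, (n < N)%nat -> Rabs (fq (x k) 0 n) <= K) ->
  exists phi : nat -> nat, (forall k, (k <= phi k)%nat) /\ exists h,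
    is_FMS N M sched Rm f T lam h /\ (forall n, (n < N)%nat -> Rabs (fq h 0 n) <= K) /\
    forall e, 0 < e -> eventually le (fun k => dist_le N M T (x (phi k)) h e).
Proof.
  intros Hok HT Hlam Hz1 HX Hz Ha HK.
  destruct (choice (fun k (Xs : dpath * (nat -> nat)) =>
      MW_run N M sched Rm f (fst Xs) (snd Xs) /\ is_fluid_scaling N M T (fst Xs) (z k) (x k)))
    as [Xs HXs].
  { intros k. destruct (HX k) as (Xk & HXk & Hflk). destruct (MW_sample_path_run _ _ _ _ _ _ HXk) as [sig Hsig].
    exists (Xk, sig). auto. }
  set (F := fun k => stacked N M (x k)).
  destruct (equi_lipschitz_compact (N + M + N) F T (Rmax (sched_bound N M sched * T) K) (sched_bound N M sched)
    HT ltac:(pose proof (sched_bound_ge1 _ _ _ _ _ Hok); lra)) as (phi & Hphi & Fh & HF).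
  { intros k i t Hi Ht. destruct (HXs k). eapply stacked_bound; eauto; lra. }
  { intros k i t t' Hi Ht Ht'. destruct (HXs k). eapply stacked_lipschitz; eauto; lra. }
  pose proof (subsequence_ge phi Hphi) as Hge.
  destruct (stacked_cvg_components N M T (fun k => x (phi k)) Fh ltac:(lra) HF) as (Hy & Hs & Hq0).
  assert (HXk : forall k, MW_run N M sched Rm f (fst (Xs (phi k))) (snd (Xs (phi k)))) by (intros; apply HXs).
  assert (Hflk : forall k, is_fluid_scaling N M T (fst (Xs (phi k))) (z (phi k)) (x (phi k))) by (intros; apply HXs).
  assert (Hz' : forall B, eventually le (fun k => B <= z (phi k)))
    by (intros B; apply (eventually_subsequence (fun k => B <= z k)); auto).
  assert (Ha' : unif_cvg N T (fun k n t => fa (x (phi k)) t n) (fun n t => lam n * t))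
    by (intros e He; apply (eventually_subsequence (fun k => forall n t, _ -> _ -> Rabs (fa (x k) t n - _) <= e)); auto).
  exists phi. split; [exact Hge|].
  exists (fluid_limit N M sched Rm lam (fun n => Fh (N + M + n)%nat 0) (fun n t => Fh n t) (fun j t => Fh (N + j)%nat t)).
  split; [|split].
  - eapply fluid_limit_is_FMS with (x := fun k => x (phi k)) (z := fun k => z (phi k))
      (X := fun k => fst (Xs (phi k))) (sigma := fun k => snd (Xs (phi k))); eauto.
  - intros n Hn.
    erewrite limit_q_initial with (x := fun k => x (phi k)) (z := fun k => z (phi k))
      (X := fun k => fst (Xs (phi k))) (sigma := fun k => snd (Xs (phi k))); eauto.
    eapply limit_q0_bound with (x := fun k => x (phi k)) (Q0 := fun n => Fh (N + M + n)%nat 0); eauto.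
  - eapply fluid_limit_close with (x := fun k => x (phi k)) (z := fun k => z (phi k))
      (X := fun k => fst (Xs (phi k))) (sigma := fun k => snd (Xs (phi k))); eauto.
Qed.

Lemma bad_sequence {J A B : Type} (leJ : J -> J -> Prop) (E : nat -> J -> Prop)
  (G : J -> A -> B -> Prop) (Good : J -> A -> Prop) :
  (forall k, eventually leJ (E k)) -> ~ eventually leJ (fun j => forall a b, G j a b -> Good j a) ->
  exists (js : nat -> J) (xs : nat -> A) (zs : nat -> B),
    forall k, E k (js k) /\ G (js k) (xs k) (zs k) /\ ~ Good (js k) (xs k).
Proof.
  intros HE Hbad.
  destruct (choice (fun k (jab : J * A * B) => let '(j, a, b) := jab in E k j /\ G j a b /\ ~ Good j a))
    as [s Hs].
  { intros k. destruct (eventually_witness leJ _ _ (HE k) Hbad) as [j [Ej Hj]].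
    apply not_all_ex_not in Hj as [a Hj]. apply not_all_ex_not in Hj as [b Hj].
    apply imply_to_and in Hj. exists (j, a, b). tauto. }
  exists (fun k => fst (fst (s k))), (fun k => snd (fst (s k))), (fun k => snd (s k)).
  intros k. specialize (Hs k). destruct (s k) as [[j a] b]. exact Hs.
Qed.

Definition data_close (N : nat) (lam : nat -> R) {J : Type} (eps : J -> R) (lamj : J -> nat -> R)
  (G : J -> fpath -> R -> Prop) (k : nat) (j : J) : Prop :=
  Rabs (eps j) < 1 / (INR k + 1) /\ (forall n, (n < N)%nat -> Rabs (lamj j n - lam n) < 1 / (INR k + 1)) /\
  (forall x z, G j x z -> INR k <= z).

Lemma data_close_eventually N lam {J : Type} (leJ : J -> J -> Prop) eps lamj G : total_order leJ ->
  (forall e, 0 < e -> eventually leJ (fun j => Rabs (eps j) < e)) ->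
  (forall e, 0 < e -> eventually leJ (fun j => forall n, (n < N)%nat -> Rabs (lamj j n - lam n) < e)) ->
  (forall B, eventually leJ (fun j => forall x z, G j x z -> B <= z)) ->
  forall k, eventually leJ (data_close N lam eps lamj G k).
Proof. intros Hord Heps Hlamj Hz k. repeat apply eventually_and; auto using inv_succ_pos. Qed.

Lemma fluid_limit_initial_eq N M T (xs : nat -> fpath) (phi : nat -> nat) h (q0 : nat -> R) : 0 <= T ->
  (forall k, (k <= phi k)%nat) -> (forall e, 0 < e -> eventually le (fun k => dist_le N M T (xs (phi k)) h e)) ->
  (forall k n, (n < N)%nat -> Rabs (fq (xs k) 0 n - q0 n) < 1 / (INR k + 1)) ->
  forall n, (n < N)%nat -> fq h 0 n = q0 n.
Proof.
  intros HT Hphi Hclose Hq0 n Hn. enough (Rabs (fq h 0 n - q0 n) <= 0) as Hle by (apply Rabs_le_iff in Hle; lra).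
  apply Rle_plus_epsilon. intros d Hd.
  destruct (Hclose (d / 2) ltac:(lra)) as [k0 Hk0]. destruct (inv_succ_small 1 (d / 2) ltac:(lra)) as [m Hm].
  set (k := Nat.max k0 m). destruct (Hk0 k ltac:(lia) 0 ltac:(lra)) as [Hxh _]. destruct (Hxh n Hn) as [Hxh0 _].
  pose proof (Hq0 (phi k) n Hn) as Hxq. specialize (Hm (phi k) ltac:(specialize (Hphi k); lia)).
  apply Rabs_le_iff in Hxh0. apply Rabs_le_iff. apply Rabs_def2 in Hxq. lra.
Qed.

Lemma fluid_limit_of_close_sequence N M sched Rm f T K lam {J : Type} (eps : J -> R) (lamj : J -> nat -> R)
  (G : J -> fpath -> R -> Prop) (js : nat -> J) (xs : nat -> fpath) (zs : nat -> R) :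
  network_ok N M sched Rm f -> 0 < T -> (forall n, (n < N)%nat -> 0 <= lam n) ->
  (forall j x z, G j x z ->
     1 <= z /\ exists X, is_MW_sample_path N M sched Rm f X /\ is_fluid_scaling N M T X z x) ->
  (forall j x z, G j x z -> forall t n, 0 <= t <= T -> (n < N)%nat ->
     Rabs (fa x t n - lamj j n * t) <= eps j) ->
  (forall j x z, G j x z -> forall n, (n < N)%nat -> Rabs (fq x 0 n) <= K) ->
  (forall k, data_close N lam eps lamj G k (js k) /\ G (js k) (xs k) (zs k)) ->
  exists phi : nat -> nat, (forall k, (k <= phi k)%nat) /\ exists h,
    is_FMS N M sched Rm f T lam h /\ (forall n, (n < N)%nat -> Rabs (fq h 0 n) <= K) /\
    forall e, 0 < e -> eventually le (fun k => dist_le N M T (xs (phi k)) h e).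
Proof.
  intros Hok HT Hlam HG Hfa Hq Hseq.
  assert (HGk : forall k, G (js k) (xs k) (zs k)) by (intros k; exact (proj2 (Hseq k))).
  assert (Heps : forall k, Rabs (eps (js k)) < 1 / (INR k + 1)) by (intros k; exact (proj1 (proj1 (Hseq k)))).
  assert (Hlamj : forall k n, (n < N)%nat -> Rabs (lamj (js k) n - lam n) < 1 / (INR k + 1))
    by (intros k; exact (proj1 (proj2 (proj1 (Hseq k))))).
  assert (Hz : forall k, INR k <= zs k) by (intros k; exact (proj2 (proj2 (proj1 (Hseq k))) _ _ (HGk k))).
  apply (fluid_limit_exists N M sched Rm f T K lam xs zs); auto.
  - intros k. apply (proj1 (HG _ _ _ (HGk k))).
  - intros k. apply (proj2 (HG _ _ _ (HGk k))).
  - intros B. destruct (nat_above B) as [k0 Hk0]. exists k0. intros k Hk.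
    pose proof (le_INR _ _ Hk). pose proof (Hz k). lra.
  - intros e He. destruct (inv_succ_small (1 + T) e He) as [k0 Hk0]. exists k0. intros k Hk n t Hn Ht.
    pose proof (Hfa _ _ _ (HGk k) t n Ht Hn) as Ha. pose proof (Heps k) as Hek. pose proof (Hlamj k n Hn) as Hlk.
    specialize (Hk0 k Hk). pose proof (Rle_abs (eps (js k))).
    (* |a - lam t| <= eps + |lam^j - lam| t <= (1 + T) / (k + 1) *)
    replace (fa (xs k) t n - lam n * t) with ((fa (xs k) t n - lamj (js k) n * t) + (lamj (js k) n - lam n) * t)
      by ring.
    eapply Rle_trans; [apply Rabs_triang|]. rewrite Rabs_mult, (Rabs_right t) by lra.
    assert (Rabs (lamj (js k) n - lam n) * t <= 1 / (INR k + 1) * T)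
      by (apply Rmult_le_compat; auto using Rabs_pos; lra).
    replace ((1 + T) / (INR k + 1)) with (1 / (INR k + 1) + 1 / (INR k + 1) * T) in Hk0
      by (field; pose proof (pos_INR k); lra).
    lra.
  - intros k n Hn. apply (Hq _ _ _ (HGk k) n Hn).
Qed.

Theorem theorem4p3
  (N M : nat) (sched : nat -> nat -> R) (Rm : nat -> nat -> R) (f : R -> R)
  (T K : R) (lam : nat -> R)
  (J : Type) (leJ : J -> J -> Prop)
  (eps : J -> R) (lamj : J -> nat -> R) (G : J -> fpath -> R -> Prop) :
  network_ok N M sched Rm f ->
  0 < T -> 0 < K ->
  (forall n, (n < N)%nat -> 0 <= lam n) ->
  total_order leJ -> countable_type J ->
  (forall j, 0 <= eps j) ->
  (forall j n, (n < N)%nat -> 0 <= lamj j n) ->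
  (forall e, 0 < e -> eventually leJ (fun j => Rabs (eps j) < e)) ->
  (forall e, 0 < e -> eventually leJ (fun j =>
     forall n, (n < N)%nat -> Rabs (lamj j n - lam n) < e)) ->
  (forall j x z, G j x z ->
     1 <= z /\ exists X, is_MW_sample_path N M sched Rm f X /\
                         is_fluid_scaling N M T X z x) ->
  (forall B, eventually leJ (fun j => forall x z, G j x z -> B <= z)) ->
  (forall j x z, G j x z -> forall t n, 0 <= t <= T -> (n < N)%nat ->
     Rabs (fa x t n - lamj j n * t) <= eps j) ->
  (forall j x z, G j x z -> forall n, (n < N)%nat -> Rabs (fq x 0 n) <= K) ->
  (forall e, 0 < e -> eventually leJ (fun j =>
     forall x z, G j x z -> exists h,
       is_FMS N M sched Rm f T lam h /\
       (forall n, (n < N)%nat -> Rabs (fq h 0 n) <= K) /\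
       dist_le N M T x h e))
  /\
  (forall (q0 : nat -> R) (eps' : J -> R),
     (forall n, (n < N)%nat -> 0 <= q0 n) ->
     (forall e, 0 < e -> eventually leJ (fun j => Rabs (eps' j) < e)) ->
     (forall j x z, G j x z -> forall n, (n < N)%nat ->
        Rabs (fq x 0 n - q0 n) <= eps' j) ->
     forall e, 0 < e -> eventually leJ (fun j =>
       forall x z, G j x z -> exists h,
         is_FMS N M sched Rm f T lam h /\
         (forall n, (n < N)%nat -> fq h 0 n = q0 n) /\
         dist_le N M T x h e)).
Proof.
  intros Hok HT _ Hlam Hord _ _ _ Heps Hlamj HG Hz Hfa Hq.
  pose proof (data_close_eventually N lam leJ eps lamj G Hord Heps Hlamj Hz) as HE.
  split.
  - intros e He. apply NNPP. intros Hne.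
    destruct (bad_sequence leJ (data_close N lam eps lamj G) G _ HE Hne) as (js & xs & zs & Hbad).
    destruct (fluid_limit_of_close_sequence N M sched Rm f T K lam eps lamj G js xs zs)
      as (phi & _ & h & HFMS & Hh0 & Hclose); auto.
    { intros k. destruct (Hbad k) as (HEk & HGk & _). auto. }
    destruct (Hclose e He) as [k0 Hk0]. apply (Hbad (phi k0)). exists h. auto.
  - intros q0 eps' _ Heps' Hq0 e He. apply NNPP. intros Hne.
    destruct (bad_sequence leJ (fun k j => data_close N lam eps lamj G k j /\ Rabs (eps' j) < 1 / (INR k + 1)) G _
      (fun k => eventually_and _ _ _ Hord (HE k) (Heps' _ (inv_succ_pos k))) Hne) as (js & xs & zs & Hbad).
    destruct (fluid_limit_of_close_sequence N M sched Rm f T K lam eps lamj G js xs zs)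
      as (phi & Hphi & h & HFMS & _ & Hclose); auto.
    { intros k. destruct (Hbad k) as ((HEk & _) & HGk & _). auto. }
    pose proof (fluid_limit_initial_eq N M T xs phi h q0 ltac:(lra) Hphi Hclose) as Hh0.
    destruct (Hclose e He) as [k0 Hk0]. apply (Hbad (phi k0)). exists h. split; [exact HFMS|]. split; [|auto].
    apply Hh0. intros k n Hn. destruct (Hbad k) as ((_ & Heps'k) & HGk & _).
    eapply Rle_lt_trans; [apply (Hq0 _ _ _ HGk n Hn) | eapply Rle_lt_trans; [apply Rle_abs | exact Heps'k]].
Qed.
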